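(* Let $f\in C^1[0,1]$ with $f(0)=0$, $h:=f'$, $q$ satisfying (q), and let $c^*$ be the threshold for $(P^{00}_c)$. For every $c>c^*$ there exists $\beta=\beta(c)<0$ with $\beta(c)\ge f(1)-c$ such that, for $b<0$, problem $(P_c)$ admits a solution $z$ with $z(1)=b$ if and only if $b\ge\beta(c)$; moreover such a solution is unique.
   Context: Condition (q): $q\in C[0,1]$, $q>0$ on $(0,1)$, $q(0)=q(1)=0$, and $\limsup_{\varphi\to0^+}q(\varphi)/\varphi<+\infty$. For $c\in\mathbb R$, a solution of problem $(P_c)$ is a function $z\in C[0,1]\cap C^1(0,1)$ with $\dot z(\varphi)=h(\varphi)-c-q(\varphi)/z(\varphi)$ and $z(\varphi)<0$ for all $\varphi\in(0,1)$, and $z(0)=0$. A solution of $(P^{00}_c)$ is a solution of $(P_c)$ which also satisfies $z(1)=0$. $c^*$ denotes the real number such that $(P^{00}_c)$ has a solution iff $c\ge c^*$ (that solution being unique). *)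

From Stdlib Require Import Reals.
From Coquelicot Require Import Coquelicot.
Open Scope R_scope.

Definition cont_on (a b : R) (g : R -> R) : Prop :=
  forall x, a <= x <= b -> forall eps, 0 < eps ->
    exists delta, 0 < delta /\
      forall y, a <= y <= b -> Rabs (y - x) < delta -> Rabs (g y - g x) < eps.

(* f in C^1[0,1] with f' = h: f continuous on [0,1], f' = h on (0,1),
   and h continuous on [0,1] (equivalent to f in C^1[0,1], h = f'
   on [0,1] with one-sided derivatives at the endpoints). *)
Definition C1_with_deriv (f h : R -> R) : Prop :=
  cont_on 0 1 f /\ cont_on 0 1 h /\
  (forall x, 0 < x < 1 -> is_derive f x (h x)).

Definition cond_q (q : R -> R) : Prop :=
  cont_on 0 1 q /\
  (forall x, 0 < x < 1 -> 0 < q x) /\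
  q 0 = 0 /\ q 1 = 0 /\
  (* limsup_{x -> 0+} q(x)/x < +oo *)
  (exists M delta, 0 < delta /\ forall x, 0 < x < delta -> q x / x <= M).

Definition sol_P (h q : R -> R) (c : R) (z : R -> R) : Prop :=
  cont_on 0 1 z /\
  (forall x, 0 < x < 1 -> ex_derive z x) /\
  (forall x, 0 < x < 1 -> continuous (Derive z) x) /\
  (forall x, 0 < x < 1 -> is_derive z x (h x - c - q x / z x)) /\
  (forall x, 0 < x < 1 -> z x < 0) /\
  z 0 = 0.

Definition sol_P00 (h q : R -> R) (c : R) (z : R -> R) : Prop :=
  sol_P h q c z /\ z 1 = 0.

From Stdlib Require Import Reals.
From Coquelicot Require Import Coquelicot.
From Stdlib Require Import Lra Lia ClassicalEpsilon Classical.
Open Scope R_scope.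

(* The equation z' = h - c - q/z has a right-hand side that is nondecreasing
   in z < 0 (as q >= 0), so solutions can be compared and are unique when
   integrated BACKWARD from x = 1 ([comparison_backward],
   [uniqueness_backward], [gap_backward]).  Existence is obtained from a
   global Picard-Lindeloef theorem ([picard_global]) applied to the equation
   with its state clipped between a sub- and a supersolution
   ([barrier_solution_backward/forward]).  Then:
   - every solution lies above f(x) - c x ([sol_P_lower_bound]), whence
     beta(c) := inf of the attained levels is >= f(1) - c;
   - levels arbitrarily close to 0 are attained ([solutions_near_zero]), by
     threading a solution between the (P^00) solutions for c* and for c,
     which are strictly ordered ([P00_ordered]); hence beta(c) < 0;
   - every level in [beta(c), 0) is attained ([solution_at_level]): the
     backward solution from (1, b) stays below a solution with a higher level
     and above f(x) - c x, so it tends to 0 at 0.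
   The file first develops the real-analysis tools (continuity on intervals,
   monotonicity, integral estimates, Picard iteration), then the comparison
   and barrier principles, and finally the constructions above. *)

(** * Continuity on a closed interval *)

(* Projection of [t] onto [[a, r]]: composing with it extends a function
   given on [[a, r]] to the whole line without changing it on [[a, r]]. *)
Definition clamp (a r t : R) : R := Rmax a (Rmin t r).

Lemma clamp_in a r t : a <= r -> a <= clamp a r t <= r.
Proof. intros; unfold clamp, Rmax, Rmin; repeat destruct Rle_dec; lra. Qed.

Lemma clamp_id a r t : a <= t <= r -> clamp a r t = t.
Proof. intros; unfold clamp, Rmax, Rmin; repeat destruct Rle_dec; lra. Qed.

Lemma clamp_lip a r s t : Rabs (clamp a r s - clamp a r t) <= Rabs (s - t).
Proof.
  unfold clamp, Rmax, Rmin; repeat destruct Rle_dec; unfold Rabs;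
    repeat destruct Rcase_abs; lra.
Qed.

Lemma continuity_pt_delta (g : R -> R) x eps : continuity_pt g x -> 0 < eps ->
  exists d, 0 < d /\ forall t, Rabs (t - x) < d -> Rabs (g t - g x) < eps.
Proof.
  intros H He. destruct (H eps He) as [d [Hd H2]]. exists d. split; [lra|].
  intros t Ht. destruct (Req_dec x t) as [<-|Hne].
  { rewrite Rminus_diag, Rabs_R0; lra. }
  apply (H2 t). split; [split; [exact I| exact Hne]| exact Ht].
Qed.

Lemma locally_of_delta (x d : R) (P : R -> Prop) : 0 < d ->
  (forall t, Rabs (t - x) < d -> P t) -> locally x P.
Proof.
  intros Hd H. exists (mkposreal d Hd). intros y Hy. apply H. exact Hy.
Qed.

Lemma is_derive_interval_ext (V Z : R -> R) s t x l : s < x < t ->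
  (forall y, s < y < t -> V y = Z y) -> is_derive V x l -> is_derive Z x l.
Proof.
  intros Hx HVZ HV. apply (is_derive_ext_loc V); auto.
  apply (locally_of_delta x (Rmin (x - s) (t - x))); [apply Rmin_pos; lra|].
  intros y Hy. pose proof (Rmin_l (x - s) (t - x)). pose proof (Rmin_r (x - s) (t - x)).
  apply HVZ. unfold Rabs in Hy; destruct Rcase_abs in Hy; lra.
Qed.

Lemma is_derive_continuity_pt f x l : is_derive f x l -> continuity_pt f x.
Proof. intros H. apply derivable_continuous_pt, ex_derive_Reals_0. exists l; auto. Qed.

(* [cont_on a b g] holds iff the clamped extension of [g] is continuous on
   the whole line (this lemma and the next); this reduces interval continuity
   to [continuity_pt], for which the algebra of continuous functions exists. *)
Lemma cont_on_clamp a b g : cont_on a b g -> continuity (fun s => g (clamp a b s)).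
Proof.
  intros Hg t. destruct (Rle_dec a b) as [Hab|Hab].
  - intros eps Heps.
    destruct (Hg (clamp a b t) (clamp_in a b t Hab) eps Heps) as [d [Hd H]].
    exists d; split; [lra|]. intros x [_ Hx]. apply H; [apply clamp_in; auto|].
    eapply Rle_lt_trans; [apply clamp_lip| exact Hx].
  - apply (continuity_pt_ext (fun _ => g a)); [|apply continuity_pt_const; intros ? ?; auto].
    intros s. replace (clamp a b s) with a; auto.
    unfold clamp, Rmax, Rmin; repeat destruct Rle_dec; lra.
Qed.

Lemma cont_on_of_clamp a b g : continuity (fun s => g (clamp a b s)) -> cont_on a b g.
Proof.
  intros Hg x Hx eps Heps.
  destruct (continuity_pt_delta _ x eps (Hg x) Heps) as [d [Hd H]].
  exists d; split; auto. intros y Hy Hyx. specialize (H y Hyx).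
  rewrite !clamp_id in H by lra. exact H.
Qed.

Lemma cont_on_continuity a b g : continuity g -> cont_on a b g.
Proof.
  intros Hg. apply cont_on_of_clamp. intros t.
  apply (continuity_pt_comp (clamp a b) g). 2: apply Hg.
  intros eps Heps. exists eps; split; auto. intros y [_ Hy].
  eapply Rle_lt_trans; [apply clamp_lip| exact Hy].
Qed.

Lemma cont_on_interior a b g x : cont_on a b g -> a < x < b -> continuity_pt g x.
Proof.
  intros Hg Hx. apply (continuity_pt_locally_ext (fun s => g (clamp a b s)) _
    (Rmin (x - a) (b - x))); [apply Rmin_pos; lra| |apply cont_on_clamp; auto].
  intros y Hy. rewrite clamp_id; auto. unfold R_dist in Hy.
  pose proof (Rmin_l (x - a) (b - x)); pose proof (Rmin_r (x - a) (b - x)).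
  unfold Rabs in Hy; destruct Rcase_abs in Hy; lra.
Qed.

Lemma cont_on_sub a b a' b' g : cont_on a b g -> a <= a' -> b' <= b -> cont_on a' b' g.
Proof.
  intros H H1 H2 x Hx eps Heps. destruct (H x ltac:(lra) eps Heps) as [d [Hd H3]].
  exists d; split; auto. intros y Hy. apply H3; lra.
Qed.

Lemma cont_on_ext a b f g : cont_on a b f -> (forall x, a <= x <= b -> f x = g x) ->
  cont_on a b g.
Proof.
  intros Hf He x Hx eps Heps. destruct (Hf x Hx eps Heps) as [d [Hd H]].
  exists d; split; auto. intros y Hy Hyx. rewrite <- !He by auto. auto.
Qed.

Lemma cont_on_point a g : cont_on a a g.
Proof.
  intros x Hx eps Heps. exists 1. split; [lra|]. intros y Hy _.
  replace y with x by lra. rewrite Rminus_diag, Rabs_R0; lra.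
Qed.

Lemma cont_on_affine a b al be : cont_on a b (fun x => al + be * x).
Proof.
  apply cont_on_continuity. intros x. apply is_derive_continuity_pt with be.
  auto_derive; auto; ring.
Qed.

Lemma cont_on_plus a b f g : cont_on a b f -> cont_on a b g ->
  cont_on a b (fun x => f x + g x).
Proof.
  intros Hf Hg. apply cont_on_of_clamp. intros t.
  apply (continuity_pt_plus (fun s => f (clamp a b s)) (fun s => g (clamp a b s)));
    apply cont_on_clamp; auto.
Qed.

Lemma cont_on_opp a b f : cont_on a b f -> cont_on a b (fun x => - f x).
Proof.
  intros Hf. apply cont_on_of_clamp. intros t.
  apply (continuity_pt_opp (fun s => f (clamp a b s))); apply cont_on_clamp; auto.
Qed.

Lemma cont_on_minus a b f g : cont_on a b f -> cont_on a b g ->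
  cont_on a b (fun x => f x - g x).
Proof. intros Hf Hg. apply (cont_on_plus a b f (fun x => - g x)); auto using cont_on_opp. Qed.

Lemma cont_on_mult a b f g : cont_on a b f -> cont_on a b g ->
  cont_on a b (fun x => f x * g x).
Proof.
  intros Hf Hg. apply cont_on_of_clamp. intros t.
  apply (continuity_pt_mult (fun s => f (clamp a b s)) (fun s => g (clamp a b s)));
    apply cont_on_clamp; auto.
Qed.

Lemma cont_on_comp a b d (phi : R -> R) : cont_on a b d -> continuity phi ->
  cont_on a b (fun x => phi (d x)).
Proof.
  intros Hd Hp. apply cont_on_of_clamp. intros t.
  apply (continuity_pt_comp (fun s => d (clamp a b s)) phi); [apply cont_on_clamp|]; auto.
Qed.

Lemma cont_on_glue a m0 m1 b Z : a <= m0 -> m0 < m1 -> m1 <= b ->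
  cont_on a m1 Z -> cont_on m0 b Z -> cont_on a b Z.
Proof.
  intros H1 H2 H3 HA HB x Hx eps Heps.
  set (r := (m1 - m0) / 2).
  assert (Hr : r = (m1 - m0) / 2) by reflexivity.
  destruct (Rle_dec x (m0 + r)).
  - destruct (HA x ltac:(lra) eps Heps) as [d [Hd H]].
    exists (Rmin d r). split; [apply Rmin_pos; unfold r; lra|].
    intros y Hy Hyx. pose proof (Rmin_l d r); pose proof (Rmin_r d r).
    apply H; [|lra]. unfold Rabs in *; destruct Rcase_abs in Hyx; lra.
  - destruct (HB x ltac:(lra) eps Heps) as [d [Hd H]].
    exists (Rmin d r). split; [apply Rmin_pos; unfold r; lra|].
    intros y Hy Hyx. pose proof (Rmin_l d r); pose proof (Rmin_r d r).
    apply H; [|lra]. unfold Rabs in *; destruct Rcase_abs in Hyx; lra.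
Qed.

Lemma cont_on_bound a r g : a <= r -> cont_on a r g ->
  exists M, forall x, a <= x <= r -> Rabs (g x) <= M.
Proof.
  intros Har Hg.
  destruct (continuity_ab_maj (fun s => Rabs (g (clamp a r s))) a r Har) as [m [Hm _]].
  { intros c _. apply (continuity_pt_comp (fun s => g (clamp a r s)) Rabs).
    - apply cont_on_clamp; auto.
    - apply Rcontinuity_abs. }
  exists (Rabs (g (clamp a r m))). intros x Hx. specialize (Hm x Hx). simpl in Hm.
  rewrite clamp_id in Hm; auto.
Qed.

Lemma cont_on_neg_bound a r g : a <= r -> cont_on a r g ->
  (forall x, a <= x <= r -> g x < 0) -> exists d, 0 < d /\ forall x, a <= x <= r -> g x <= - d.
Proof.
  intros Har Hg Hn.
  destruct (continuity_ab_maj (fun s => g (clamp a r s)) a r Har) as [m [Hm Hm2]].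
  { intros c _. apply cont_on_clamp; auto. }
  exists (- g (clamp a r m)). rewrite clamp_id by auto. split.
  - specialize (Hn m Hm2). lra.
  - intros x Hx. specialize (Hm x Hx). simpl in Hm. rewrite !clamp_id in Hm by auto. lra.
Qed.

(** * Monotonicity and sign preservation *)

(* Mean value theorem: a function continuous on [[a, b]] with a nonnegative
   derivative inside is nondecreasing from [a] to [b]. *)
Lemma mono_le a b phi : a <= b -> cont_on a b phi ->
  (forall x, a < x < b -> exists l, is_derive phi x l /\ 0 <= l) -> phi a <= phi b.
Proof.
  intros Hab Hc Hd.
  set (psi := fun s => phi (clamp a b s)).
  destruct (MVT_gen psi a b (fun x => Rmax 0 (Derive psi x))) as [c [_ Hmvt]].
  - rewrite Rmin_left, Rmax_right by lra. intros x Hx.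
    destruct (Hd x Hx) as [l [Hl Hl0]].
    assert (Hpsi : is_derive psi x l).
    { apply (is_derive_interval_ext phi psi a b); auto.
      intros t Ht. unfold psi. rewrite clamp_id; lra. }
    rewrite (is_derive_unique _ _ _ Hpsi), Rmax_right; auto.
  - intros x _. apply cont_on_clamp; auto.
  - pose proof (Rmax_l 0 (Derive psi c)).
    unfold psi in *. rewrite !clamp_id in Hmvt by lra. nra.
Qed.

Lemma pos_sq_derive v : is_derive (fun t => Rmax t 0 ^ 2) v (2 * Rmax v 0).
Proof.
  destruct (Rtotal_order v 0) as [Hn|[H0|Hp]].
  - rewrite Rmax_right by lra.
    apply (is_derive_ext_loc (fun _ : R => 0 : R)).
    { apply (locally_of_delta v (- v)); [lra|]. intros t Ht.
      rewrite Rmax_right; [change (@eq R 0 (0 ^ 2)); ring|].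
      unfold Rabs in Ht; destruct Rcase_abs in Ht; lra. }
    replace (2 * 0) with (zero : R) by (unfold zero; simpl; ring).
    exact (is_derive_const (K:=R_AbsRing) (V:=R_NormedModule) 0 v).
  - subst v. rewrite Rmax_right by lra. apply is_derive_Reals. intros eps Heps.
    exists (mkposreal eps Heps). simpl. intros t Ht Hte.
    rewrite Rplus_0_l, (Rmax_right 0 0) by lra.
    unfold Rmax; destruct Rle_dec; simpl.
    + match goal with |- Rabs ?e < _ => replace e with 0 by (field; auto) end.
      rewrite Rabs_R0; lra.
    + match goal with |- Rabs ?e < _ => replace e with t by (field; auto) end.
      exact Hte.
  - rewrite Rmax_left by lra.
    apply (is_derive_ext_loc (fun t : R => t ^ 2 : R)).
    { apply (locally_of_delta v v); [lra|]. intros t Ht.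
      rewrite Rmax_left; [reflexivity|]. unfold Rabs in Ht; destruct Rcase_abs in Ht; lra. }
    auto_derive; auto; ring.
Qed.

Lemma pos_sq_comp_derive d x l : is_derive d x l ->
  is_derive (fun t => Rmax (d t) 0 ^ 2) x (2 * Rmax (d x) 0 * l).
Proof.
  intros Hd. replace (2 * Rmax (d x) 0 * l) with (scal l (2 * Rmax (d x) 0))
    by (unfold scal; simpl; unfold mult; simpl; ring).
  apply (is_derive_comp (fun t => Rmax t 0 ^ 2) d); auto. apply pos_sq_derive.
Qed.

Lemma pos_sq_continuity : continuity (fun v => Rmax v 0 ^ 2).
Proof. intros v. apply (is_derive_continuity_pt _ _ _ (pos_sq_derive v)). Qed.

(* Sign preservation, backward: if [d t <= 0] and [d] cannot decrease while
   positive, then [d <= 0] on all of [[s, t]].  (Apply [mono_le] to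
   [max(d,0)^2], whose derivative is then nonnegative.) *)
Lemma nonpos_backward s t d : s <= t -> cont_on s t d ->
  (forall x, s < x < t -> exists l, is_derive d x l /\ (0 < d x -> 0 <= l)) ->
  d t <= 0 -> forall x, s <= x <= t -> d x <= 0.
Proof.
  intros Hst Hc Hd Ht x Hx.
  assert (Hm : Rmax (d x) 0 ^ 2 <= Rmax (d t) 0 ^ 2).
  { apply (mono_le x t (fun v => Rmax (d v) 0 ^ 2)); [lra| |].
    - apply (cont_on_comp x t d (fun v => Rmax v 0 ^ 2)); [|apply pos_sq_continuity].
      apply (cont_on_sub s t); auto; lra.
    - intros y Hy. destruct (Hd y ltac:(lra)) as [l [Hl Hl2]].
      exists (2 * Rmax (d y) 0 * l). split; [apply pos_sq_comp_derive; auto|].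
      unfold Rmax; destruct Rle_dec; [lra|]. apply Rmult_le_pos; [lra|]. apply Hl2; lra. }
  rewrite (Rmax_right (d t) 0) in Hm by lra.
  unfold Rmax in Hm; destruct Rle_dec; [lra|]. nra.
Qed.

Lemma nonpos_forward s t d : s <= t -> cont_on s t d ->
  (forall x, s < x < t -> exists l, is_derive d x l /\ (0 < d x -> l <= 0)) ->
  d s <= 0 -> forall x, s <= x <= t -> d x <= 0.
Proof.
  intros Hst Hc Hd Hs x Hx.
  assert (Hm : - (Rmax (d s) 0 ^ 2) <= - (Rmax (d x) 0 ^ 2)).
  { apply (mono_le s x (fun v => - (Rmax (d v) 0 ^ 2))); [lra| |].
    - apply cont_on_opp, (cont_on_comp s x d (fun v => Rmax v 0 ^ 2));
        [|apply pos_sq_continuity].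
      apply (cont_on_sub s t); auto; lra.
    - intros y Hy. destruct (Hd y ltac:(lra)) as [l [Hl Hl2]].
      exists (- (2 * Rmax (d y) 0 * l)). split.
      { apply (is_derive_opp (fun v => Rmax (d v) 0 ^ 2)), pos_sq_comp_derive; auto. }
      unfold Rmax; destruct Rle_dec; [lra|]. assert (l <= 0) by (apply Hl2; lra). nra. }
  rewrite (Rmax_right (d s) 0) in Hm by lra.
  unfold Rmax in Hm; destruct Rle_dec; [lra|]. nra.
Qed.

(** * Integral estimates *)

Lemma continuity_ex_RInt g a b : continuity g -> ex_RInt g a b.
Proof.
  intros H. apply (ex_RInt_continuous (V:=R_CompleteNormedModule)). intros z _.
  apply continuity_pt_filterlim. apply H.
Qed.

Lemma RInt_minus_continuity g1 g2 a b : continuity g1 -> continuity g2 ->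
  RInt g1 a b - RInt g2 a b = RInt (fun t => g1 t - g2 t) a b.
Proof.
  intros H1 H2. symmetry. apply (RInt_minus (V:=R_CompleteNormedModule));
    apply continuity_ex_RInt; auto.
Qed.

Lemma RInt_abs_const g a b M : continuity g ->
  (forall t, Rmin a b <= t <= Rmax a b -> Rabs (g t) <= M) ->
  Rabs (RInt g a b) <= Rabs (b - a) * M.
Proof.
  intros Hg HM. destruct (Rle_dec a b) as [Hab|Hab].
  - rewrite (Rabs_right (b - a)) by lra.
    apply abs_RInt_le_const; auto using continuity_ex_RInt.
    intros t Ht. apply HM. rewrite Rmin_left, Rmax_right; lra.
  - rewrite <- opp_RInt_swap by (apply continuity_ex_RInt; auto).
    change (opp (RInt g b a)) with (- RInt g b a). rewrite Rabs_Ropp.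
    rewrite (Rabs_left (b - a)), Ropp_minus_distr by lra.
    apply abs_RInt_le_const; [lra| apply continuity_ex_RInt; auto|].
    intros t Ht. apply HM. rewrite Rmin_right, Rmax_left; lra.
Qed.

Lemma RInt_lip g x0 M : continuity g -> (forall t, Rabs (g t) <= M) ->
  forall x x', Rabs (RInt g x0 x - RInt g x0 x') <= M * Rabs (x - x').
Proof.
  intros Hg HM x x'.
  assert (Hdiff : RInt g x0 x - RInt g x0 x' = RInt g x' x).
  { rewrite <- (RInt_Chasles g x0 x' x) by (apply continuity_ex_RInt; auto).
    change (plus (RInt g x0 x') (RInt g x' x)) with (RInt g x0 x' + RInt g x' x). ring. }
  rewrite Hdiff, Rmult_comm. apply RInt_abs_const; auto.
Qed.

Lemma lip_continuity (y : R -> R) M :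
  (forall x x', Rabs (y x - y x') <= M * Rabs (x - x')) -> continuity y.
Proof.
  intros H x eps Heps. pose proof (Rabs_pos M). pose proof (RRle_abs M).
  exists (eps / (Rabs M + 1)). split; [apply Rdiv_lt_0_compat; lra|].
  intros z [_ Hz]. simpl in *. unfold R_dist in *.
  eapply Rle_lt_trans; [apply H|]. pose proof (Rabs_pos (z - x)).
  apply Rle_lt_trans with ((Rabs M + 1) * Rabs (z - x)); [apply Rmult_le_compat_r; lra|].
  apply Rmult_lt_reg_r with (/ (Rabs M + 1)); [apply Rinv_0_lt_compat; lra|].
  replace ((Rabs M + 1) * Rabs (z - x) * / (Rabs M + 1)) with (Rabs (z - x))
    by (field; lra).
  exact Hz.
Qed.

Lemma RInt_abs_le_antiderivative g Phi psi a b : a <= b -> continuity g -> continuity psi ->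
  (forall t, a <= t <= b -> is_derive Phi t (psi t)) ->
  (forall t, a <= t <= b -> Rabs (g t) <= psi t) ->
  Rabs (RInt g a b) <= Phi b - Phi a.
Proof.
  intros Hab Hg Hp HPhi Hle.
  eapply Rle_trans; [apply abs_RInt_le; auto; apply continuity_ex_RInt; auto|].
  assert (HR : RInt psi a b = Phi b - Phi a).
  { apply is_RInt_unique, (is_RInt_derive Phi psi).
    - intros t Ht. rewrite Rmin_left, Rmax_right in Ht by lra. auto.
    - intros t _. apply continuity_pt_filterlim, Hp. }
  rewrite <- HR. apply RInt_le; auto using continuity_ex_RInt.
  - apply continuity_ex_RInt. intros x.
    apply (continuity_pt_comp g Rabs); auto using Rcontinuity_abs.
  - intros t Ht. apply Hle; lra.
Qed.

Definition bielecki_weight K x0 x := exp (2 * K * Rabs (x - x0)).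

Lemma bielecki_weight_ge1 K x0 x : 0 <= K -> 1 <= bielecki_weight K x0 x.
Proof.
  intros HK. unfold bielecki_weight. pose proof (exp_ineq1_le (2 * K * Rabs (x - x0))).
  pose proof (Rabs_pos (x - x0)).
  assert (0 <= 2 * K * Rabs (x - x0)) by (apply Rmult_le_pos; lra). lra.
Qed.

Lemma bielecki_int K x0 g C x : 0 < K -> 0 <= C -> continuity g ->
  (forall t, Rabs (g t) <= C * bielecki_weight K x0 t) ->
  Rabs (RInt g x0 x) <= C / (2 * K) * bielecki_weight K x0 x.
Proof.
  intros HK HC Hg Hb. unfold bielecki_weight in *.
  assert (0 <= C / (2 * K)) by (apply Rmult_le_pos; [lra| left; apply Rinv_0_lt_compat; lra]).
  destruct (Rle_dec x0 x) as [Hx|Hx].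
  - eapply Rle_trans.
    + apply (RInt_abs_le_antiderivative g (fun t => C / (2 * K) * exp (2 * K * (t - x0)))
                         (fun t => C * exp (2 * K * (t - x0)))); auto.
      * intros u. apply is_derive_continuity_pt with (C * (2 * K) * exp (2 * K * (u - x0))).
        auto_derive; auto. unfold Rminus; ring.
      * intros t _. auto_derive; auto. unfold Rminus; field. lra.
      * intros t Ht. specialize (Hb t). rewrite (Rabs_right (t - x0)) in Hb by lra. exact Hb.
    + rewrite (Rabs_right (x - x0)) by lra. rewrite Rminus_diag, Rmult_0_r, exp_0. lra.
  - rewrite <- opp_RInt_swap by (apply continuity_ex_RInt; auto).
    change (opp (RInt g x x0)) with (- RInt g x x0). rewrite Rabs_Ropp.
    eapply Rle_trans.
    + apply (RInt_abs_le_antiderivative g (fun t => - (C / (2 * K)) * exp (2 * K * (x0 - t)))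
                         (fun t => C * exp (2 * K * (x0 - t)))); auto; try lra.
      * intros u. apply is_derive_continuity_pt with (- C * (2 * K) * exp (2 * K * (x0 - u))).
        auto_derive; auto. unfold Rminus; ring.
      * intros t _. auto_derive; auto. unfold Rminus; field. lra.
      * intros t Ht. specialize (Hb t). rewrite (Rabs_left1 (t - x0)) in Hb by lra.
        rewrite Ropp_minus_distr in Hb. exact Hb.
    + rewrite (Rabs_left (x - x0)), Ropp_minus_distr by lra.
      rewrite Rminus_diag, Rmult_0_r, exp_0. lra.
Qed.

Lemma geometric_small C eps : 0 <= C -> 0 < eps -> exists N, C * (/2) ^ N < eps.
Proof.
  intros HC He.
  destruct (pow_lt_1_zero (/2) ltac:(rewrite Rabs_right; lra) (eps / (C + 1)))
    as [N HN]; [apply Rdiv_lt_0_compat; lra|].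
  exists N. specialize (HN N (le_n N)).
  rewrite Rabs_right in HN by (apply Rle_ge, pow_le; lra).
  assert (C * (/2)^N <= (C + 1) * (/ 2) ^ N) by (apply Rmult_le_compat_r; [apply pow_le|]; lra).
  assert ((C + 1) * (/ 2) ^ N < eps).
  { apply Rmult_lt_reg_r with (/ (C + 1)); [apply Rinv_0_lt_compat; lra|].
    replace ((C + 1) * (/ 2) ^ N * / (C + 1)) with ((/2)^N) by (field; lra).
    replace (eps * / (C + 1)) with (eps / (C + 1)) by reflexivity. exact HN. }
  lra.
Qed.

Lemma le_of_geometric_error A B C : 0 <= C -> (forall n, A <= B + C * (/2) ^ n) -> A <= B.
Proof.
  intros HC H. destruct (Rle_dec A B) as [|Hn]; auto.
  destruct (geometric_small C (A - B)) as [N HN]; auto; [lra|].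
  specialize (H N). lra.
Qed.

Lemma is_lim_seq_tail_dist u (l : R) n a B : is_lim_seq u l ->
  (forall k, Rabs (u (n + k)%nat - a) <= B) -> Rabs (l - a) <= B.
Proof.
  intros Hl Hb. destruct (Rle_dec (Rabs (l - a)) B) as [|Hn]; auto. exfalso.
  apply is_lim_seq_spec in Hl.
  destruct (Hl (mkposreal (Rabs (l - a) - B) ltac:(lra))) as [N HN]. simpl in HN.
  specialize (HN (n + N)%nat ltac:(lia)). specialize (Hb N).
  assert (Rabs (l - a) <= Rabs (u (n + N)%nat - l) + Rabs (u (n + N)%nat - a)).
  { replace (l - a) with (- (u (n + N)%nat - l) + (u (n + N)%nat - a)) by ring.
    eapply Rle_trans; [apply Rabs_triang|]. rewrite Rabs_Ropp. lra. }
  lra.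
Qed.

(** * Global Picard-Lindeloef theorem *)

(* For a right-hand side [G] that is bounded, globally Lipschitz in the
   state and continuous along continuous paths, the Picard iterates converge
   (geometrically in the Bielecki norm with weight [exp (2 K |x - x0|)]) to a
   global solution of [y' = G x y], [y x0 = y0]. *)
Section Picard.

Variables (G : R -> R -> R) (K M x0 y0 : R).
Hypothesis K_pos : 0 < K.
Hypothesis G_lip : forall t z1 z2, Rabs (G t z1 - G t z2) <= K * Rabs (z1 - z2).
Hypothesis G_bound : forall t z, Rabs (G t z) <= M.
Hypothesis G_cont : forall y, continuity y -> continuity (fun t => G t (y t)).

Fixpoint picard_iter (n : nat) : R -> R :=
  match n with
  | O => fun _ => y0
  | S n => fun x => y0 + RInt (fun t => G t (picard_iter n t)) x0 x
  end.

Let w := bielecki_weight K x0.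
Let D := M / (2 * K).

Lemma picard_M_nonneg : 0 <= M.
Proof. specialize (G_bound 0 0). pose proof (Rabs_pos (G 0 0)). lra. Qed.

Lemma picard_D_nonneg : 0 <= D.
Proof.
  pose proof picard_M_nonneg. apply Rmult_le_pos; [lra| left; apply Rinv_0_lt_compat; lra].
Qed.

Lemma picard_weight_ge1 x : 1 <= w x.
Proof. apply bielecki_weight_ge1; lra. Qed.

Lemma picard_iter_S_lip n : continuity (fun t => G t (picard_iter n t)) ->
  forall x x', Rabs (picard_iter (S n) x - picard_iter (S n) x') <= M * Rabs (x - x').
Proof.
  intros Hc x x'. cbn [picard_iter].
  replace (y0 + RInt (fun t => G t (picard_iter n t)) x0 x -
           (y0 + RInt (fun t => G t (picard_iter n t)) x0 x'))
    with (RInt (fun t => G t (picard_iter n t)) x0 x -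
          RInt (fun t => G t (picard_iter n t)) x0 x') by ring.
  apply RInt_lip; auto.
Qed.

Lemma picard_iter_continuity n : continuity (picard_iter n).
Proof.
  induction n as [|n IH].
  - intros u. apply continuity_pt_const. intros ? ?; reflexivity.
  - apply (lip_continuity _ M), picard_iter_S_lip, G_cont, IH.
Qed.

Let integrand_cont n : continuity (fun t => G t (picard_iter n t)) :=
  G_cont _ (picard_iter_continuity n).

Lemma picard_step n x :
  Rabs (picard_iter (S n) x - picard_iter n x) <= D * (/2) ^ n * w x.
Proof.
  pose proof picard_M_nonneg. pose proof picard_D_nonneg.
  revert x. induction n as [|n IH]; intros x.
  - cbn [picard_iter]. rewrite pow_O, Rmult_1_r.
    replace (y0 + RInt (fun t => G t y0) x0 x - y0) with (0 + RInt (fun t => G t y0) x0 x)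
      by ring. rewrite Rplus_0_l.
    eapply Rle_trans; [apply RInt_abs_const; [apply (integrand_cont O)| intros; apply G_bound]|].
    unfold w, D, bielecki_weight in *. pose proof (exp_ineq1_le (2 * K * Rabs (x - x0))).
    pose proof (Rabs_pos (x - x0)).
    assert (HX : M / (2 * K) * (1 + 2 * K * Rabs (x - x0)) = M / (2 * K) + Rabs (x - x0) * M)
      by (field; lra).
    assert (M / (2 * K) * (1 + 2 * K * Rabs (x - x0))
            <= M / (2 * K) * exp (2 * K * Rabs (x - x0))) by (apply Rmult_le_compat_l; auto).
    lra.
  - change (picard_iter (S (S n)) x) with
      (y0 + RInt (fun t => G t (picard_iter (S n) t)) x0 x).
    change (picard_iter (S n) x) with (y0 + RInt (fun t => G t (picard_iter n t)) x0 x).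
    replace (y0 + RInt (fun t => G t (picard_iter (S n) t)) x0 x
             - (y0 + RInt (fun t => G t (picard_iter n t)) x0 x))
      with (RInt (fun t => G t (picard_iter (S n) t)) x0 x
            - RInt (fun t => G t (picard_iter n t)) x0 x) by ring.
    rewrite RInt_minus_continuity by apply integrand_cont.
    eapply Rle_trans.
    + apply (bielecki_int K x0 _ (K * (D * (/2)^n))); auto.
      * apply Rmult_le_pos; [lra| apply Rmult_le_pos; [lra| apply pow_le; lra]].
      * intros u. apply continuity_pt_minus; apply integrand_cont.
      * intros t. eapply Rle_trans; [apply G_lip|]. rewrite Rmult_assoc.
        apply Rmult_le_compat_l; [lra| apply IH].
    + simpl. unfold w. right. field. lra.
Qed.

Lemma picard_cauchy n k x :
  Rabs (picard_iter (n + k) x - picard_iter n x) <= 2 * D * (/2) ^ n * w x.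
Proof.
  pose proof picard_D_nonneg. pose proof (picard_weight_ge1 x).
  assert (Hk : Rabs (picard_iter (n + k) x - picard_iter n x)
               <= 2 * D * ((/2) ^ n - (/2) ^ (n + k)) * w x).
  { induction k as [|k IH].
    - rewrite Nat.add_0_r, Rminus_diag, Rabs_R0, Rminus_diag. lra.
    - rewrite Nat.add_succ_r.
      replace (picard_iter (S (n + k)) x - picard_iter n x)
        with ((picard_iter (S (n + k)) x - picard_iter (n + k) x)
              + (picard_iter (n + k) x - picard_iter n x)) by ring.
      eapply Rle_trans; [apply Rabs_triang|].
      pose proof (picard_step (n + k) x). simpl pow.
      assert (D * (/ 2) ^ (n + k) * w x + 2 * D * ((/ 2) ^ n - (/ 2) ^ (n + k)) * w x
              = 2 * D * ((/ 2) ^ n - / 2 * (/ 2) ^ (n + k)) * w x) by field.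
      lra. }
  eapply Rle_trans; [apply Hk|].
  apply Rmult_le_compat_r; [lra|]. apply Rmult_le_compat_l; [lra|].
  pose proof (pow_le (/2) (n + k) ltac:(lra)). lra.
Qed.

Lemma picard_converges x : exists l : R, is_lim_seq (fun n => picard_iter n x) l.
Proof.
  pose proof picard_D_nonneg. pose proof (picard_weight_ge1 x).
  apply ex_lim_seq_cauchy_corr. intros eps.
  destruct (geometric_small (4 * D * w x) eps) as [N HN]; [nra| apply cond_pos|].
  exists N. intros n m Hn Hm.
  pose proof (picard_cauchy N (n - N) x) as H1. pose proof (picard_cauchy N (m - N) x) as H2.
  replace (N + (n - N))%nat with n in H1 by lia. replace (N + (m - N))%nat with m in H2 by lia.
  replace (picard_iter n x - picard_iter m x)
    with ((picard_iter n x - picard_iter N x) - (picard_iter m x - picard_iter N x)) by ring.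
  eapply Rle_lt_trans; [apply Rabs_triang|]. rewrite Rabs_Ropp. lra.
Qed.

Definition picard_limit x : R := real (Lim_seq (fun n => picard_iter n x)).

Lemma picard_limit_is_lim x : is_lim_seq (fun n => picard_iter n x) (picard_limit x).
Proof.
  destruct (picard_converges x) as [l Hl]. unfold picard_limit.
  rewrite (is_lim_seq_unique _ _ Hl). exact Hl.
Qed.

Lemma picard_limit_error n x :
  Rabs (picard_limit x - picard_iter n x) <= 2 * D * (/2) ^ n * w x.
Proof.
  apply (is_lim_seq_tail_dist _ _ n _ _ (picard_limit_is_lim x)). intros k.
  apply picard_cauchy.
Qed.

Lemma picard_limit_lip x x' :
  Rabs (picard_limit x - picard_limit x') <= M * Rabs (x - x').
Proof.
  pose proof picard_D_nonneg. pose proof (picard_weight_ge1 x). pose proof (picard_weight_ge1 x').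
  apply (le_of_geometric_error _ _ (2 * D * (w x + w x'))); [nra|]. intros n.
  pose proof (picard_iter_S_lip n (integrand_cont n) x x').
  pose proof (picard_limit_error (S n) x). pose proof (picard_limit_error (S n) x') as Hx'.
  rewrite Rabs_minus_sym in Hx'. simpl pow in *.
  set (y := picard_limit) in *. set (p := picard_iter (S n)) in *.
  replace (y x - y x') with ((y x - p x) + (p x - p x') + (p x' - y x')) by ring.
  eapply Rle_trans; [apply Rabs_triang|].
  eapply Rle_trans; [apply Rplus_le_compat_r, Rabs_triang|].
  assert (0 <= 2 * D * (w x + w x') * (/ 2) ^ n)
    by (apply Rmult_le_pos; [nra| apply pow_le; lra]).
  assert (2 * D * (/ 2 * (/ 2) ^ n) * w x + 2 * D * (/ 2 * (/ 2) ^ n) * w x'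
          = 2 * D * (w x + w x') * (/ 2) ^ n / 2) by field.
  lra.
Qed.

Lemma picard_limit_continuity : continuity picard_limit.
Proof. apply (lip_continuity _ M). apply picard_limit_lip. Qed.

Lemma picard_limit_fixed x :
  picard_limit x = y0 + RInt (fun t => G t (picard_limit t)) x0 x.
Proof.
  pose proof picard_D_nonneg. pose proof (picard_weight_ge1 x). pose proof (Rabs_pos (x - x0)).
  set (y := picard_limit). set (g := fun t => G t (y t)).
  assert (Hgc : continuity g) by (apply G_cont, picard_limit_continuity).
  assert (HI : forall n, Rabs (picard_iter (S n) x - (y0 + RInt g x0 x))
                         <= Rabs (x - x0) * (K * (2 * D * (/2) ^ n * w x))).
  { intros n. cbn [picard_iter].
    replace (y0 + RInt (fun t => G t (picard_iter n t)) x0 x - (y0 + RInt g x0 x))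
      with (RInt (fun t => G t (picard_iter n t)) x0 x - RInt g x0 x) by ring.
    rewrite RInt_minus_continuity by (apply integrand_cont || exact Hgc).
    apply RInt_abs_const.
    { intros u; apply continuity_pt_minus; [apply integrand_cont| apply Hgc]. }
    intros t Ht. eapply Rle_trans; [apply G_lip|]. apply Rmult_le_compat_l; [lra|].
    rewrite Rabs_minus_sym. eapply Rle_trans; [apply picard_limit_error|].
    apply Rmult_le_compat_l; [apply Rmult_le_pos; [lra| apply pow_le; lra]|].
    unfold w, bielecki_weight.
    assert (Rabs (t - x0) <= Rabs (x - x0)).
    { unfold Rmin, Rmax in Ht; destruct Rle_dec in Ht; unfold Rabs;
        repeat destruct Rcase_abs; lra. }
    destruct (Req_dec (Rabs (t - x0)) (Rabs (x - x0))) as [He|He]; [rewrite He; lra|].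
    left; apply exp_increasing, Rmult_lt_compat_l; lra. }
  assert (HZ : Rabs (y x - (y0 + RInt g x0 x)) <= 0).
  { assert (0 <= 2 * D * w x) by nra.
    assert (0 <= Rabs (x - x0) * (K * (2 * D * w x))) by (apply Rmult_le_pos; nra).
    apply (le_of_geometric_error _ 0 (D * w x + Rabs (x - x0) * (K * (2 * D * w x))));
      [nra|].
    intros n. specialize (HI n). pose proof (picard_limit_error (S n) x) as Hb.
    simpl pow in Hb. fold y in Hb.
    replace (y x - (y0 + RInt g x0 x))
      with ((y x - picard_iter (S n) x) + (picard_iter (S n) x - (y0 + RInt g x0 x))) by ring.
    eapply Rle_trans; [apply Rabs_triang|].
    assert (2 * D * (/ 2 * (/ 2) ^ n) * w x + Rabs (x - x0) * (K * (2 * D * (/ 2) ^ n * w x))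
            <= 0 + (D * w x + Rabs (x - x0) * (K * (2 * D * w x))) * (/ 2) ^ n)
      by (right; field).
    lra. }
  pose proof (Rabs_pos (y x - (y0 + RInt g x0 x))).
  apply Rminus_diag_uniq, Rabs_eq_0. lra.
Qed.

Theorem picard_global :
  exists y, continuity y /\ y x0 = y0 /\ forall x, is_derive y x (G x (y x)).
Proof.
  exists picard_limit. split; [apply picard_limit_continuity|]. split.
  - rewrite picard_limit_fixed, RInt_point. simpl. unfold zero; simpl. ring.
  - intros x. set (g := fun t => G t (picard_limit t)).
    assert (Hgc : continuity g) by (apply G_cont, picard_limit_continuity).
    apply (is_derive_ext (fun x => y0 + RInt g x0 x)).
    { intros t. rewrite picard_limit_fixed. reflexivity. }
    replace (G x (picard_limit x)) with (plus zero (g x)) by (unfold plus, zero, g; simpl; ring).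
    apply (is_derive_plus (fun _ => y0) (fun x => RInt g x0 x)).
    + exact (is_derive_const (K:=R_AbsRing) (V:=R_NormedModule) y0 x).
    + apply (is_derive_RInt g (fun x => RInt g x0 x) x0 x).
      * apply filter_forall. intros b.
        apply (RInt_correct (V:=R_CompleteNormedModule)), continuity_ex_RInt, Hgc.
      * apply continuity_pt_filterlim, Hgc.
Qed.

End Picard.

(** * Comparison principles for [z' = h - c - q / z] *)

Definition rhs (h q : R -> R) (c x z : R) : R := h x - c - q x / z.

Definition super_sol h q c s t V :=
  forall x, s < x < t -> exists l, is_derive V x l /\ rhs h q c x (V x) <= l.
Definition sub_sol h q c s t V :=
  forall x, s < x < t -> exists l, is_derive V x l /\ l <= rhs h q c x (V x).
Definition solves h q c s t V :=
  forall x, s < x < t -> is_derive V x (rhs h q c x (V x)).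

Lemma solves_sub_sol h q c s t V : solves h q c s t V -> sub_sol h q c s t V.
Proof. intros H x Hx. exists (rhs h q c x (V x)). split; auto; lra. Qed.

Lemma solves_super_sol h q c s t V : solves h q c s t V -> super_sol h q c s t V.
Proof. intros H x Hx. exists (rhs h q c x (V x)). split; auto; lra. Qed.

Lemma solves_restrict h q c s t s' t' V : solves h q c s t V -> s <= s' -> t' <= t ->
  solves h q c s' t' V.
Proof. intros H H1 H2 x Hx. apply H; lra. Qed.

(* Since [q >= 0], the right-hand side is nondecreasing in [z < 0]; this is
   what makes backward comparison work without any Lipschitz bound. *)
Lemma rhs_mono h q c x v w : 0 <= q x -> v <= w -> w < 0 -> rhs h q c x v <= rhs h q c x w.
Proof.
  intros Hq Hvw Hw. unfold rhs. assert (q x / w <= q x / v).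
  { unfold Rdiv. apply Rmult_le_compat_l; auto.
    apply Rmult_le_reg_r with (- v * - w); [nra|].
    replace (/ w * (- v * - w)) with v by (field; lra).
    replace (/ v * (- v * - w)) with w by (field; lra). lra. }
  lra.
Qed.

Lemma comparison_backward h q c s t V1 V2 : s <= t -> cont_on s t V1 -> cont_on s t V2 ->
  (forall x, s < x < t -> V1 x < 0 /\ V2 x < 0 /\ 0 <= q x) ->
  sub_sol h q c s t V1 -> super_sol h q c s t V2 -> V2 t <= V1 t ->
  forall x, s <= x <= t -> V2 x <= V1 x.
Proof.
  intros Hst H1 H2 Hn Hs1 Hs2 Ht x Hx.
  cut (V2 x - V1 x <= 0); [lra|].
  apply (nonpos_backward s t (fun x => V2 x - V1 x)); auto; [apply cont_on_minus; auto| |lra].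
  intros z Hz. destruct (Hs1 z Hz) as [l1 [Hl1 Hl1']]. destruct (Hs2 z Hz) as [l2 [Hl2 Hl2']].
  exists (l2 - l1). split; [apply (is_derive_minus V2 V1); auto|].
  intros Hp. destruct (Hn z Hz) as [Ha [Hb Hc]].
  pose proof (rhs_mono h q c z (V1 z) (V2 z) Hc ltac:(lra) Hb). lra.
Qed.

Lemma uniqueness_backward h q c s t V1 V2 : s <= t -> cont_on s t V1 -> cont_on s t V2 ->
  (forall x, s < x < t -> V1 x < 0 /\ V2 x < 0 /\ 0 <= q x) ->
  solves h q c s t V1 -> solves h q c s t V2 -> V1 t = V2 t ->
  forall x, s <= x <= t -> V1 x = V2 x.
Proof.
  intros Hst H1 H2 Hn Hs1 Hs2 Ht x Hx. apply Rle_antisym.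
  - apply (comparison_backward h q c s t V2 V1); auto using solves_sub_sol, solves_super_sol;
      try lra.
    intros z Hz; destruct (Hn z Hz) as [? [? ?]]; auto.
  - apply (comparison_backward h q c s t V1 V2); auto using solves_sub_sol, solves_super_sol;
      lra.
Qed.

Lemma gap_backward h q c s t V1 V2 k : s <= t -> 0 <= k -> cont_on s t V1 -> cont_on s t V2 ->
  (forall x, s < x < t -> V1 x < 0 /\ V2 x < 0 /\ 0 <= q x) ->
  solves h q c s t V1 -> solves h q c s t V2 -> V2 t - V1 t <= k ->
  forall x, s <= x <= t -> V2 x - V1 x <= k.
Proof.
  intros Hst Hk H1 H2 Hn Hs1 Hs2 Ht x Hx.
  cut (V2 x - V1 x - k <= 0); [lra|].
  apply (nonpos_backward s t (fun x => V2 x - V1 x - k)); [lra| | |lra|lra].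
  { apply cont_on_minus; [apply cont_on_minus; auto|].
    apply (cont_on_ext s t (fun x => k + 0 * x)); [apply cont_on_affine| intros; ring]. }
  intros z Hz. exists (rhs h q c z (V2 z) - rhs h q c z (V1 z)). split.
  - replace (rhs h q c z (V2 z) - rhs h q c z (V1 z))
      with (rhs h q c z (V2 z) - rhs h q c z (V1 z) - 0) by ring.
    apply (is_derive_minus (fun x => V2 x - V1 x) (fun _ => k)).
    + apply (is_derive_minus V2 V1); auto.
    + exact (is_derive_const (K:=R_AbsRing) (V:=R_NormedModule) k z).
  - intros Hp. destruct (Hn z Hz) as [Ha [Hb Hc]].
    pose proof (rhs_mono h q c z (V1 z) (V2 z) Hc ltac:(lra) Hb). lra.
Qed.

Lemma nonpos_forward_linear s t d L : s <= t -> cont_on s t d ->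
  (forall x, s < x < t -> exists l, is_derive d x l /\ (0 < d x -> l <= L * d x)) ->
  d s <= 0 -> forall x, s <= x <= t -> d x <= 0.
Proof.
  intros Hst Hc Hd Hs x Hx.
  assert (Hw : d x * exp (- L * x) <= 0).
  { apply (nonpos_forward s t (fun x => d x * exp (- L * x))); auto.
    - apply cont_on_mult; auto. apply cont_on_continuity. intros v.
      apply is_derive_continuity_pt with (- L * exp (- L * v)). auto_derive; auto; ring.
    - intros z Hz. destruct (Hd z Hz) as [l [Hl Hl2]].
      exists (l * exp (- L * z) + d z * (- L * exp (- L * z))). split.
      + apply (is_derive_mult d (fun x => exp (- L * x))); auto.
        * auto_derive; auto. ring.
        * intros; unfold mult; simpl; ring.
      + intros Hp. pose proof (exp_pos (- L * z)).
        assert (Hdz : 0 < d z) by nra. specialize (Hl2 Hdz). nra.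
    - pose proof (exp_pos (- L * s)). nra. }
  pose proof (exp_pos (- L * x)). nra.
Qed.

(** * Solutions between barriers *)

Lemma continuity_pt_Rmax f g x : continuity_pt f x -> continuity_pt g x ->
  continuity_pt (fun t => Rmax (f t) (g t)) x.
Proof.
  intros Hf Hg eps Heps.
  destruct (continuity_pt_delta f x eps Hf Heps) as [d1 [Hd1 H1]].
  destruct (continuity_pt_delta g x eps Hg Heps) as [d2 [Hd2 H2]].
  exists (Rmin d1 d2). split; [apply Rmin_pos; auto|]. intros y [_ Hy]. simpl in *.
  unfold R_dist in *. pose proof (Rmin_l d1 d2). pose proof (Rmin_r d1 d2).
  specialize (H1 y ltac:(lra)). specialize (H2 y ltac:(lra)). revert H1 H2.
  unfold Rmax; repeat destruct Rle_dec; unfold Rabs; repeat destruct Rcase_abs; lra.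
Qed.

Lemma continuity_pt_Rmin f g x : continuity_pt f x -> continuity_pt g x ->
  continuity_pt (fun t => Rmin (f t) (g t)) x.
Proof.
  intros Hf Hg.
  apply (continuity_pt_ext (fun t => - Rmax (- f t) (- g t))).
  { intros t. rewrite Rmax_opp_Rmin. ring. }
  apply (continuity_pt_opp (fun t => Rmax (- f t) (- g t))).
  apply continuity_pt_Rmax; apply (continuity_pt_opp _ _); auto.
Qed.

Definition clip (lo hi : R -> R) (x v : R) : R := Rmax (lo x) (Rmin v (hi x)).

Lemma clip_lip lo hi x v1 v2 : Rabs (clip lo hi x v1 - clip lo hi x v2) <= Rabs (v1 - v2).
Proof.
  unfold clip, Rmax, Rmin; repeat destruct Rle_dec; unfold Rabs; repeat destruct Rcase_abs; lra.
Qed.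

Lemma clip_band lo hi x v : lo x <= hi x -> lo x <= clip lo hi x v <= hi x.
Proof. intros; unfold clip, Rmax, Rmin; repeat destruct Rle_dec; lra. Qed.

Lemma clip_id lo hi x v : lo x <= v <= hi x -> clip lo hi x v = v.
Proof. intros; unfold clip, Rmax, Rmin; repeat destruct Rle_dec; lra. Qed.

Lemma clip_below lo hi x v : v <= lo x <= hi x -> clip lo hi x v = lo x.
Proof. intros; unfold clip, Rmax, Rmin; repeat destruct Rle_dec; lra. Qed.

Lemma clip_above lo hi x v : lo x <= hi x <= v -> clip lo hi x v = hi x.
Proof. intros; unfold clip, Rmax, Rmin; repeat destruct Rle_dec; lra. Qed.

Lemma div_neg_lip Q d p a b : 0 < d -> 0 <= p <= Q -> a <= - d -> b <= - d ->
  Rabs (p / a - p / b) <= Q / (d * d) * Rabs (a - b).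
Proof.
  intros Hd Hp Ha Hb.
  replace (p / a - p / b) with (p * (b - a) / (a * b)) by (field; lra).
  unfold Rdiv. rewrite !Rabs_mult, Rabs_inv by nra.
  rewrite (Rabs_right p), (Rabs_right (a * b)), <- Rabs_Ropp, Ropp_minus_distr by nra.
  assert (/ (a * b) <= / (d * d)) by (apply Rinv_le_contravar; nra).
  assert (0 < / (a * b)) by (apply Rinv_0_lt_compat; nra).
  pose proof (Rabs_pos (a - b)).
  apply Rle_trans with (Q * Rabs (a - b) * / (d * d)); [|right; ring].
  apply Rmult_le_compat; try apply Rmult_le_compat; nra.
Qed.

Lemma rhs_lip h q c x z1 z2 Qm d : 0 < d -> 0 <= q x <= Qm -> z1 <= - d -> z2 <= - d ->
  Rabs (rhs h q c x z1 - rhs h q c x z2) <= Qm / (d * d) * Rabs (z1 - z2).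
Proof.
  intros Hd Hq H1 H2. unfold rhs.
  replace (h x - c - q x / z1 - (h x - c - q x / z2)) with (- (q x / z1 - q x / z2)) by ring.
  rewrite Rabs_Ropp. apply div_neg_lip; auto.
Qed.

Lemma rhs_abs_bound h q c x z Mh Qm d : 0 < d -> Rabs (h x) <= Mh -> 0 <= q x <= Qm ->
  z <= - d -> Rabs (rhs h q c x z) <= Mh + Rabs c + Qm / d.
Proof.
  intros Hd Hh Hq Hz. unfold rhs.
  assert (Rabs (q x / z) <= Qm / d).
  { unfold Rdiv. rewrite Rabs_mult, Rabs_inv, (Rabs_right (q x)), Rabs_left by lra.
    apply Rmult_le_compat; try lra; [left; apply Rinv_0_lt_compat; lra|].
    apply Rinv_le_contravar; lra. }
  pose proof (Rabs_triang (h x - c) (- (q x / z))). pose proof (Rabs_triang (h x) (- c)).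
  rewrite Rabs_Ropp in *. unfold Rminus in *. lra.
Qed.

(* The equation with its state clipped into a band [[lo, hi]] lying below
   [- d < 0] has a solution through any point, by [picard_global] applied to
   the clamped, clipped right-hand side. *)
Lemma clipped_solution h q c a r lo hi x0 y0 d :
  a < r -> cont_on a r h -> cont_on a r q -> (forall x, a <= x <= r -> 0 <= q x) ->
  cont_on a r lo -> cont_on a r hi -> (forall x, a <= x <= r -> lo x <= hi x) ->
  0 < d -> (forall x, a <= x <= r -> hi x <= - d) -> a <= x0 <= r ->
  exists y, cont_on a r y /\ y x0 = y0 /\
    forall x, a < x < r -> is_derive y x (rhs h q c x (clip lo hi x (y x))).
Proof.
  intros Har Hh Hq Hq0 Hlo Hhi Hlh Hd Hhd Hx0.
  destruct (cont_on_bound a r h ltac:(lra) Hh) as [Hm HHm].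
  destruct (cont_on_bound a r q ltac:(lra) Hq) as [Qm HQm].
  set (ext := fun g : R -> R => fun t => g (clamp a r t)).
  set (G := fun t z => rhs (ext h) (ext q) c t (clip (ext lo) (ext hi) t z)).
  assert (Hin : forall t, a <= clamp a r t <= r) by (intros; apply clamp_in; lra).
  assert (Hband : forall t z, clip (ext lo) (ext hi) t z <= - d).
  { intros t z. pose proof (clip_band (ext lo) (ext hi) t z (Hlh _ (Hin t))).
    pose proof (Hhd _ (Hin t)). unfold ext in *. lra. }
  assert (Hqq : forall t, 0 <= ext q t <= Qm).
  { intros t. unfold ext. split; [apply Hq0; auto|].
    eapply Rle_trans; [apply RRle_abs| apply HQm; auto]. }
  assert (HQ0 : 0 <= Qm) by (specialize (Hqq a); lra).
  assert (HQd : 0 <= Qm / (d * d)) by (apply Rmult_le_pos; [|left; apply Rinv_0_lt_compat]; nra).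
  destruct (picard_global G (Qm / (d * d) + 1) (Hm + Rabs c + Qm / d) x0 y0)
    as [y [Hyc [Hy0 Hyd]]].
  - lra.
  - intros t z1 z2. unfold G. eapply Rle_trans; [apply (rhs_lip _ _ _ _ _ _ Qm d); auto|].
    pose proof (clip_lip (ext lo) (ext hi) t z1 z2). pose proof (Rabs_pos (z1 - z2)). nra.
  - intros t z. apply (rhs_abs_bound _ _ _ _ _ _ _ _ Hd); auto. apply HHm; auto.
  - intros yy Hyy t. unfold G, rhs, clip.
    assert (Hcl : forall g, cont_on a r g -> continuity_pt (ext g) t)
      by (intros g Hg; apply cont_on_clamp; auto).
    apply continuity_pt_minus; [apply continuity_pt_minus; [apply Hcl; auto|]|].
    + apply continuity_pt_const. intros ? ?; reflexivity.
    + apply continuity_pt_div; [apply Hcl; auto| |].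
      * apply continuity_pt_Rmax; [apply Hcl; auto|].
        apply continuity_pt_Rmin; [apply Hyy| apply Hcl; auto].
      * pose proof (Hband t (yy t)). unfold clip in *. lra.
  - exists y. split; [apply cont_on_continuity; auto|]. split; auto.
    intros x Hx. specialize (Hyd x). unfold G, rhs, clip, ext in Hyd.
    rewrite !clamp_id in Hyd by lra. exact Hyd.
Qed.

(* Backward barrier principle: between a supersolution [lo] and a subsolution
   [hi] (both below [- d]) there is a solution through any point of the band
   at the right endpoint; it is the clipped solution, which never touches the
   clipping. *)
Lemma barrier_solution_backward h q c a r lo hi y0 d :
  a < r -> cont_on a r h -> cont_on a r q -> (forall x, a <= x <= r -> 0 <= q x) ->
  cont_on a r lo -> cont_on a r hi -> (forall x, a <= x <= r -> lo x <= hi x) ->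
  0 < d -> (forall x, a <= x <= r -> hi x <= - d) ->
  super_sol h q c a r lo -> sub_sol h q c a r hi -> lo r <= y0 <= hi r ->
  exists y, cont_on a r y /\ y r = y0 /\
    (forall x, a <= x <= r -> lo x <= y x <= hi x) /\ solves h q c a r y.
Proof.
  intros Har Hh Hq Hq0 Hlo Hhi Hlh Hd Hhd Hslo Hshi Hy0.
  destruct (clipped_solution h q c a r lo hi r y0 d) as [y [Hyc [Hyr Hyd]]]; auto; [lra|].
  assert (Hband : forall x, a <= x <= r -> lo x <= y x <= hi x).
  { intros x Hx. split.
    - cut (lo x - y x <= 0); [lra|].
      apply (nonpos_backward a r (fun x => lo x - y x)); [lra| apply cont_on_minus; auto| |lra|lra].
      intros z Hz. destruct (Hslo z Hz) as [l [Hl Hl2]].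
      exists (l - rhs h q c z (clip lo hi z (y z))).
      split; [apply (is_derive_minus lo y); auto|].
      intros Hp. rewrite clip_below by (pose proof (Hlh z ltac:(lra)); lra). lra.
    - cut (y x - hi x <= 0); [lra|].
      apply (nonpos_backward a r (fun x => y x - hi x)); [lra| apply cont_on_minus; auto| |lra|lra].
      intros z Hz. destruct (Hshi z Hz) as [l [Hl Hl2]].
      exists (rhs h q c z (clip lo hi z (y z)) - l).
      split; [apply (is_derive_minus y hi); auto|].
      intros Hp. rewrite clip_above by (pose proof (Hlh z ltac:(lra)); lra). lra. }
  exists y. split; auto. split; auto. split; auto.
  intros x Hx. rewrite <- (clip_id lo hi x (y x)) by (apply Hband; lra). auto.
Qed.

Lemma barrier_solution_forward h q c a r lo hi y0 d :
  a < r -> cont_on a r h -> cont_on a r q -> (forall x, a <= x <= r -> 0 <= q x) ->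
  cont_on a r lo -> cont_on a r hi -> (forall x, a <= x <= r -> lo x <= hi x) ->
  0 < d -> (forall x, a <= x <= r -> hi x <= - d) ->
  sub_sol h q c a r lo -> super_sol h q c a r hi -> lo a <= y0 <= hi a ->
  exists y, cont_on a r y /\ y a = y0 /\
    (forall x, a <= x <= r -> lo x <= y x <= hi x) /\ solves h q c a r y.
Proof.
  intros Har Hh Hq Hq0 Hlo Hhi Hlh Hd Hhd Hslo Hshi Hy0.
  destruct (clipped_solution h q c a r lo hi a y0 d) as [y [Hyc [Hya Hyd]]]; auto; [lra|].
  assert (Hband : forall x, a <= x <= r -> lo x <= y x <= hi x).
  { intros x Hx. split.
    - cut (lo x - y x <= 0); [lra|].
      apply (nonpos_forward a r (fun x => lo x - y x)); [lra| apply cont_on_minus; auto| |lra|lra].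
      intros z Hz. destruct (Hslo z Hz) as [l [Hl Hl2]].
      exists (l - rhs h q c z (clip lo hi z (y z))).
      split; [apply (is_derive_minus lo y); auto|].
      intros Hp. rewrite clip_below by (pose proof (Hlh z ltac:(lra)); lra). lra.
    - cut (y x - hi x <= 0); [lra|].
      apply (nonpos_forward a r (fun x => y x - hi x)); [lra| apply cont_on_minus; auto| |lra|lra].
      intros z Hz. destruct (Hshi z Hz) as [l [Hl Hl2]].
      exists (rhs h q c z (clip lo hi z (y z)) - l).
      split; [apply (is_derive_minus y hi); auto|].
      intros Hp. rewrite clip_above by (pose proof (Hlh z ltac:(lra)); lra). lra. }
  exists y. split; auto. split; auto. split; auto.
  intros x Hx. rewrite <- (clip_id lo hi x (y x)) by (apply Hband; lra). auto.
Qed.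

(** * Solutions on [(0, x0]] below a barrier *)

Lemma rhs_lower_bound h q c x z Mh : Rabs (h x) <= Mh -> 0 <= q x -> z < 0 ->
  - (Mh + Rabs c) <= rhs h q c x z.
Proof.
  intros Hh Hq Hz. unfold rhs.
  assert (0 <= q x / - z) by (apply Rmult_le_pos; auto; left; apply Rinv_0_lt_compat; lra).
  replace (h x - c - q x / z) with (h x - c + q x / - z) by (field; lra).
  pose proof (Rle_abs (- h x)). pose proof (Rle_abs c). rewrite Rabs_Ropp in *. lra.
Qed.

Lemma rhs_upper_bound h q c x z Mh Qm : Rabs (h x) <= Mh -> 0 <= q x <= Qm -> z <= - 1 ->
  rhs h q c x z <= Mh + Rabs c + Qm.
Proof.
  intros Hh Hq Hz. unfold rhs.
  assert (q x / - z <= q x).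
  { unfold Rdiv. rewrite <- (Rmult_1_r (q x)) at 2. apply Rmult_le_compat_l; [lra|].
    rewrite <- Rinv_1. apply Rinv_le_contravar; lra. }
  replace (h x - c - q x / z) with (h x - c + q x / - z) by (field; lra).
  pose proof (Rle_abs (h x)). pose proof (Rle_abs (- c)). rewrite Rabs_Ropp in *. lra.
Qed.

Lemma solution_slope_bound h q c s t V Mh : s <= t -> cont_on s t V ->
  solves h q c s t V -> (forall x, s < x < t -> V x < 0) ->
  (forall x, s <= x <= t -> Rabs (h x) <= Mh) -> (forall x, s <= x <= t -> 0 <= q x) ->
  V s - (Mh + Rabs c) * (t - s) <= V t.
Proof.
  intros Hst HVc HVd HVn HMh Hq0.
  assert (H : V s + (Mh + Rabs c) * s <= V t + (Mh + Rabs c) * t).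
  { apply (mono_le s t (fun x => V x + (Mh + Rabs c) * x)); [lra| |].
    - apply cont_on_plus; auto.
      apply (cont_on_ext s t (fun x => 0 + (Mh + Rabs c) * x));
        [apply cont_on_affine| intros; ring].
    - intros x Hx. exists (rhs h q c x (V x) + (Mh + Rabs c)). split.
      + apply (is_derive_plus V (fun x => (Mh + Rabs c) * x)); [apply HVd; auto|].
        auto_derive; auto; ring.
      + pose proof (rhs_lower_bound h q c x (V x) Mh ltac:(apply HMh; lra)
                      ltac:(apply Hq0; lra) ltac:(apply HVn; lra)). lra. }
  nra.
Qed.

(* A line through [(t, - A)], [A >= 1], steeper than the bound of
   [rhs_upper_bound], is a supersolution to the left of [t]. *)
Lemma steep_line_super_sol h q c s t A Mh Qm : 1 <= A ->
  (forall x, s <= x <= t -> Rabs (h x) <= Mh) ->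
  (forall x, s <= x <= t -> 0 <= q x <= Qm) ->
  super_sol h q c s t (fun x => - A + (Mh + Rabs c + Qm) * (x - t)).
Proof.
  intros HA Hh Hq x Hx. exists (Mh + Rabs c + Qm). split; [auto_derive; auto; ring|].
  assert (0 <= Mh + Rabs c + Qm).
  { pose proof (Hh x ltac:(lra)). pose proof (Hq x ltac:(lra)).
    pose proof (Rabs_pos (h x)). pose proof (Rabs_pos c). lra. }
  apply rhs_upper_bound; auto; [apply Hh| apply Hq|]; try lra.
  assert ((Mh + Rabs c + Qm) * (x - t) <= 0) by nra. lra.
Qed.

(* On each [[a, x0]] with [a > 0] there is a backward solution ending at
   [y0 <= hi x0] and staying below the subsolution [hi]; the steep line of
   [steep_line_super_sol] serves as lower barrier. *)
Lemma backward_solution_on h q c a x0 y0 hi : 0 < a < x0 -> x0 <= 1 ->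
  cont_on 0 1 h -> cont_on 0 1 q -> (forall x, 0 <= x <= 1 -> 0 <= q x) ->
  cont_on 0 x0 hi -> (forall x, 0 < x <= x0 -> hi x < 0) -> sub_sol h q c 0 x0 hi ->
  y0 <= hi x0 ->
  exists Y, cont_on a x0 Y /\ Y x0 = y0 /\ (forall x, a <= x <= x0 -> Y x <= hi x) /\
    solves h q c a x0 Y.
Proof.
  intros Ha Hx0 Hh Hq Hq0 Hhic Hhin Hhis Hy0.
  destruct (cont_on_bound 0 1 h ltac:(lra) Hh) as [Mh HMh].
  destruct (cont_on_bound 0 1 q ltac:(lra) Hq) as [Qm HQm].
  destruct (cont_on_bound 0 x0 hi ltac:(lra) Hhic) as [Bh HBh].
  assert (Hqb : forall x, a <= x <= x0 -> 0 <= q x <= Qm).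
  { intros x Hx. split; [apply Hq0; lra|]. eapply Rle_trans; [apply RRle_abs| apply HQm; lra]. }
  assert (HM2 : 0 <= Mh + Rabs c + Qm).
  { pose proof (HMh 0 ltac:(lra)). pose proof (Hqb a ltac:(lra)).
    pose proof (Rabs_pos (h 0)). pose proof (Rabs_pos c). lra. }
  set (A := Bh + Rabs y0 + 1).
  assert (HA : 1 <= A).
  { unfold A. pose proof (HBh 0 ltac:(lra)). pose proof (Rabs_pos (hi 0)).
    pose proof (Rabs_pos y0). lra. }
  destruct (cont_on_neg_bound a x0 hi) as [d [Hd Hdn]];
    [lra| apply (cont_on_sub 0 x0); auto; lra| intros x Hx; apply Hhin; lra|].
  destruct (barrier_solution_backward h q c a x0
              (fun x => - A + (Mh + Rabs c + Qm) * (x - x0)) hi y0 d)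
    as [Y [HYc [HY0 [HYb HYs]]]]; auto; try lra.
  - apply (cont_on_sub 0 1); auto; lra.
  - apply (cont_on_sub 0 1); auto; lra.
  - intros; apply Hq0; lra.
  - apply (cont_on_ext a x0 (fun x => (- A - (Mh + Rabs c + Qm) * x0) + (Mh + Rabs c + Qm) * x));
      [apply cont_on_affine| intros; ring].
  - apply (cont_on_sub 0 x0); auto; lra.
  - intros x Hx. specialize (HBh x ltac:(lra)). pose proof (Rabs_pos y0).
    assert ((Mh + Rabs c + Qm) * (x - x0) <= 0) by nra.
    pose proof (Rle_abs (- hi x)). rewrite Rabs_Ropp in *. unfold A. lra.
  - apply steep_line_super_sol; auto. intros x Hx; apply HMh; lra.
  - intros x Hx. apply Hhis; lra.
  - rewrite Rminus_diag, Rmult_0_r. pose proof (Rle_abs (- y0)). rewrite Rabs_Ropp in *.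
    unfold A. pose proof (HBh 0 ltac:(lra)). pose proof (Rabs_pos (hi 0)). lra.
  - exists Y. split; auto. split; auto. split; [intros x Hx; apply HYb; auto| auto].
Qed.

(* Backward solutions on [(0, x0]]: the solutions of [backward_solution_on]
   for the various [a] agree (backward uniqueness), so they glue into one
   solution on [(0, x0]], set to [0] at [0]. *)
Lemma solution_to_zero h q c x0 y0 hi : 0 < x0 <= 1 ->
  cont_on 0 1 h -> cont_on 0 1 q -> (forall x, 0 <= x <= 1 -> 0 <= q x) ->
  cont_on 0 x0 hi -> (forall x, 0 < x <= x0 -> hi x < 0) -> sub_sol h q c 0 x0 hi ->
  y0 <= hi x0 ->
  exists Y, Y 0 = 0 /\ Y x0 = y0 /\ (forall a, 0 < a <= x0 -> cont_on a x0 Y) /\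
    solves h q c 0 x0 Y /\ (forall x, 0 < x <= x0 -> Y x <= hi x).
Proof.
  intros Hx0 Hh Hq Hq0 Hhic Hhin Hhis Hy0.
  set (P := fun a Y => cont_on a x0 Y /\ Y x0 = y0 /\
                       (forall x, a <= x <= x0 -> Y x <= hi x) /\ solves h q c a x0 Y).
  assert (Hex : forall a, exists Y, 0 < a < x0 -> P a Y).
  { intros a. destruct (Rlt_dec 0 a) as [Ha|Ha]; [destruct (Rlt_dec a x0) as [Ha2|Ha2]|];
      try (exists (fun _ => 0); intros; lra).
    destruct (backward_solution_on h q c a x0 y0 hi) as [Y HY]; auto; try lra.
    exists Y. intros _. exact HY. }
  set (Ys := fun a => proj1_sig (constructive_indefinite_description _ (Hex a))).
  assert (HYs : forall a, 0 < a < x0 -> P a (Ys a)).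
  { intros a Ha. unfold Ys. destruct (constructive_indefinite_description _ (Hex a)); auto. }
  assert (Hagree : forall a a', 0 < a <= a' -> a' < x0 ->
                   forall x, a' <= x <= x0 -> Ys a x = Ys a' x).
  { intros a a' Ha Ha' x Hx. destruct (HYs a ltac:(lra)) as [H1 [H2 [H3 H4]]].
    destruct (HYs a' ltac:(lra)) as [G1 [G2 [G3 G4]]].
    apply (uniqueness_backward h q c a' x0 (Ys a) (Ys a')); auto; try lra.
    - apply (cont_on_sub a x0); auto; lra.
    - intros z Hz. specialize (H3 z ltac:(lra)). specialize (G3 z ltac:(lra)).
      pose proof (Hhin z ltac:(lra)). repeat split; try lra. apply Hq0; lra.
    - apply (solves_restrict h q c a x0); auto; lra. }
  set (Y := fun x => if Rle_dec x 0 then 0 else Ys (Rmin (x / 2) (x0 / 2)) x).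
  assert (HY : forall x a, 0 < a <= x -> x <= x0 -> a < x0 -> Y x = Ys a x).
  { intros x a Ha Hx Ha0. unfold Y. destruct Rle_dec as [Hn|Hn]; [lra|].
    assert (Ha1 : 0 < Rmin (x / 2) (x0 / 2) <= x /\ Rmin (x / 2) (x0 / 2) < x0)
      by (unfold Rmin; destruct Rle_dec; lra).
    destruct (Rle_dec a (Rmin (x / 2) (x0 / 2))).
    - symmetry. apply Hagree; lra.
    - apply Hagree; lra. }
  exists Y. split; [unfold Y; destruct Rle_dec; lra|]. split.
  { rewrite (HY x0 (x0 / 2)) by lra. apply (HYs (x0 / 2)). lra. }
  split; [|split].
  - intros a Ha. destruct (Req_dec a x0) as [->|Hne]; [apply cont_on_point|].
    apply (cont_on_ext a x0 (Ys a)); [apply HYs; lra|]. intros x Hx. symmetry. apply HY; lra.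
  - intros x Hx. rewrite (HY x (x / 2)) by lra.
    apply (is_derive_interval_ext (Ys (x / 2)) Y (x / 2) x0); [lra| |apply (HYs (x / 2)); lra].
    intros t Ht. symmetry. apply HY; lra.
  - intros x Hx. set (a := Rmin (x / 2) (x0 / 2)).
    assert (Ha : 0 < a <= x /\ a < x0) by (unfold a, Rmin; destruct Rle_dec; lra).
    rewrite (HY x a) by lra. apply (HYs a); lra.
Qed.

(** * Solutions of [(P_c)] *)

Lemma sol_P_of_solves h q c Z : cont_on 0 1 h -> cont_on 0 1 q -> Z 0 = 0 ->
  (forall a, 0 < a <= 1 -> cont_on a 1 Z) ->
  (forall eps, 0 < eps -> exists d, 0 < d /\ forall x, 0 < x < d -> Rabs (Z x) < eps) ->
  solves h q c 0 1 Z -> (forall x, 0 < x < 1 -> Z x < 0) -> sol_P h q c Z.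
Proof.
  intros Hh Hq HZ0 HZc HZs HZd HZn.
  split; [|split; [|split; [|split; [|split]]]]; auto.
  - intros x Hx eps Heps. destruct (Req_dec x 0) as [->|Hx0].
    + destruct (HZs eps Heps) as [d [Hd H]]. exists d. split; auto.
      intros y Hy Hyx. rewrite HZ0, Rminus_0_r. destruct (Req_dec y 0) as [->|Hy0].
      * rewrite HZ0, Rabs_R0; lra.
      * apply H. rewrite Rminus_0_r in Hyx. unfold Rabs in Hyx; destruct Rcase_abs in Hyx; lra.
    + destruct (HZc (x / 2) ltac:(lra) x ltac:(lra) eps Heps) as [d [Hd H]].
      exists (Rmin d (x / 2)). split; [apply Rmin_pos; lra|].
      intros y Hy Hyx. pose proof (Rmin_l d (x / 2)). pose proof (Rmin_r d (x / 2)).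
      apply H; [|lra]. unfold Rabs in Hyx; destruct Rcase_abs in Hyx; lra.
  - intros x Hx. eexists. apply HZd; auto.
  - intros x Hx.
    apply (continuous_ext_loc _ (fun t => h t - c - q t / Z t)).
    + apply (locally_of_delta x (Rmin x (1 - x))); [apply Rmin_pos; lra|].
      intros t Ht. pose proof (Rmin_l x (1 - x)). pose proof (Rmin_r x (1 - x)).
      symmetry. apply is_derive_unique, HZd. unfold Rabs in Ht; destruct Rcase_abs in Ht; lra.
    + apply continuity_pt_filterlim.
      apply continuity_pt_minus; [apply continuity_pt_minus|].
      * apply (cont_on_interior 0 1); auto.
      * apply continuity_pt_const; intros ? ?; auto.
      * apply continuity_pt_div; [apply (cont_on_interior 0 1); auto| |].
        -- apply is_derive_continuity_pt with (rhs h q c x (Z x)). apply HZd; auto.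
        -- pose proof (HZn x Hx); lra.
Qed.

Lemma squeeze_at_zero lo Y d0 : 0 < d0 -> cont_on 0 1 lo -> lo 0 = 0 ->
  (forall x, 0 < x < d0 -> lo x <= Y x <= 0) ->
  forall eps, 0 < eps -> exists d, 0 < d /\ forall x, 0 < x < d -> Rabs (Y x) < eps.
Proof.
  intros Hd0 Hlo Hlo0 HY eps Heps.
  destruct (Hlo 0 ltac:(lra) eps Heps) as [d1 [Hd1 H1]].
  exists (Rmin d1 (Rmin d0 1)). split; [apply Rmin_pos; [|apply Rmin_pos]; lra|].
  intros x Hx. pose proof (Rmin_l d1 (Rmin d0 1)). pose proof (Rmin_r d1 (Rmin d0 1)).
  pose proof (Rmin_l d0 1). pose proof (Rmin_r d0 1).
  specialize (H1 x ltac:(lra) ltac:(rewrite Rminus_0_r, Rabs_right; lra)).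
  rewrite Hlo0, Rminus_0_r in H1. specialize (HY x ltac:(lra)).
  revert H1. unfold Rabs; repeat destruct Rcase_abs; lra.
Qed.

Lemma solves_glue h q c x1 xm Z Yb Yf : 0 < x1 < xm -> xm < 1 ->
  (forall x, 0 < x < xm -> Yb x = Z x) -> (forall x, x1 < x < 1 -> Yf x = Z x) ->
  solves h q c 0 xm Yb -> solves h q c x1 1 Yf -> solves h q c 0 1 Z.
Proof.
  intros Hx1 Hxm HZb HZf HYb HYf x Hx. destruct (Rlt_dec x xm).
  - rewrite <- (HZb x) by lra.
    apply (is_derive_interval_ext Yb Z 0 xm); auto; [lra| apply HYb; lra].
  - rewrite <- (HZf x) by lra.
    apply (is_derive_interval_ext Yf Z x1 1); auto; [lra| apply HYf; lra].
Qed.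

(* Every solution of [(P_c)] lies above [f x - c x]: [z - f + c x] has
   derivative [- q / z >= 0] and vanishes at [0]. *)
Lemma sol_P_lower_bound f h q c z : C1_with_deriv f h -> f 0 = 0 ->
  (forall x, 0 <= x <= 1 -> 0 <= q x) -> sol_P h q c z ->
  forall x, 0 <= x <= 1 -> f x - c * x <= z x.
Proof.
  intros [Hf [Hh Hd]] Hf0 Hq0 [Hzc [_ [_ [Hzd [Hzn Hz0]]]]] x Hx.
  assert (H : z 0 - f 0 + c * 0 <= z x - f x + c * x).
  { apply (mono_le 0 x (fun t => z t - f t + c * t)); [lra| |].
    - apply (cont_on_sub 0 1); try lra.
      apply cont_on_plus; [apply cont_on_minus; auto|].
      apply (cont_on_ext 0 1 (fun t => 0 + c * t)); [apply cont_on_affine| intros; ring].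
    - intros t Ht. exists (h t - c - q t / z t - h t + c). split.
      + apply (is_derive_plus (fun t => z t - f t) (fun t => c * t)).
        * apply (is_derive_minus z f); [apply Hzd| apply Hd]; lra.
        * auto_derive; auto. ring.
      + assert (z t < 0) by (apply Hzn; lra). assert (0 <= q t) by (apply Hq0; lra).
        assert (0 <= q t / - z t) by (apply Rmult_le_pos; auto; left; apply Rinv_0_lt_compat; lra).
        replace (h t - c - q t / z t - h t + c) with (q t / - z t) by (field; lra). lra. }
  rewrite Hz0, Hf0 in H. lra.
Qed.

Lemma sol_P_unique h q c z1 z2 : (forall x, 0 <= x <= 1 -> 0 <= q x) ->
  sol_P h q c z1 -> sol_P h q c z2 -> z1 1 = z2 1 -> forall x, 0 <= x <= 1 -> z1 x = z2 x.
Proof.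
  intros Hq0 Hz1 Hz2 H1 x Hx.
  destruct Hz1 as [H1c [_ [_ [H1d [H1n H10]]]]]. destruct Hz2 as [H2c [_ [_ [H2d [H2n H20]]]]].
  destruct (Req_dec x 0) as [->|Hx0]; [congruence|].
  apply (uniqueness_backward h q c x 1 z1 z2); auto; try lra.
  - apply (cont_on_sub 0 1); auto; lra.
  - apply (cont_on_sub 0 1); auto; lra.
  - intros z Hz. split; [apply H1n; lra| split; [apply H2n; lra| apply Hq0; lra]].
  - intros z Hz. apply H1d; lra.
  - intros z Hz. apply H2d; lra.
Qed.

(** * Solutions of [(P^00)] are strictly ordered in [c] *)

(* If a solution [u] for [c] starts at or below a solution [w] for [cs <= c],
   it falls below [w] at least at rate [c - cs]: first [u <= w] by a Gronwall
   argument, and then [(u - w)' = cs - c + q (u - w) / (u w) <= cs - c]. *)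
Lemma gap_forward h q c cs t r u w : cs <= c -> t <= r ->
  cont_on t r u -> cont_on t r w -> cont_on t r q -> (forall x, t <= x <= r -> 0 <= q x) ->
  (forall x, t <= x <= r -> u x < 0 /\ w x < 0) ->
  solves h q c t r u -> solves h q cs t r w -> u t <= w t ->
  forall x, t <= x <= r -> u x - w x <= - (c - cs) * (x - t).
Proof.
  intros Hc Htr Huc Hwc Hq Hq0 Hneg Hu Hw Ht.
  assert (Hdiff : forall z, t < z < r ->
    rhs h q c z (u z) - rhs h q cs z (w z) = - (c - cs) + q z / (u z * w z) * (u z - w z)).
  { intros z Hz. destruct (Hneg z ltac:(lra)). unfold rhs. field. lra. }
  destruct (cont_on_bound t r q Htr Hq) as [Qm HQm].
  destruct (cont_on_neg_bound t r u Htr Huc) as [du [Hdu Hdun]]; [apply Hneg|].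
  destruct (cont_on_neg_bound t r w Htr Hwc) as [dw [Hdw Hdwn]]; [apply Hneg|].
  assert (Hcoef : forall z, t <= z <= r -> 0 <= q z / (u z * w z) <= Qm / (du * dw)).
  { intros z Hz. specialize (Hdun z Hz). specialize (Hdwn z Hz). pose proof (Hq0 z Hz).
    split; [apply Rmult_le_pos; [|left; apply Rinv_0_lt_compat]; nra|].
    apply Rmult_le_compat; [lra| left; apply Rinv_0_lt_compat; nra| |].
    - eapply Rle_trans; [apply RRle_abs| apply HQm; auto].
    - apply Rinv_le_contravar; nra. }
  assert (Hle : forall x, t <= x <= r -> u x - w x <= 0).
  { apply (nonpos_forward_linear t r (fun x => u x - w x) (Qm / (du * dw)));
      [lra| apply cont_on_minus; auto| |lra].
    intros z Hz. exists (rhs h q c z (u z) - rhs h q cs z (w z)).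
    split; [apply (is_derive_minus u w); [apply Hu| apply Hw]; auto|].
    intros Hp. rewrite Hdiff by auto. specialize (Hcoef z ltac:(lra)). nra. }
  intros x Hx.
  assert (Hm : - (u t - w t) - (c - cs) * t <= - (u x - w x) - (c - cs) * x).
  { apply (mono_le t x (fun x => - (u x - w x) - (c - cs) * x)); [lra| |].
    - apply cont_on_minus; [apply cont_on_opp, cont_on_minus; apply (cont_on_sub t r); auto; lra|].
      apply (cont_on_ext t x (fun x => 0 + (c - cs) * x)); [apply cont_on_affine| intros; ring].
    - intros z Hz. exists (- (rhs h q c z (u z) - rhs h q cs z (w z)) - (c - cs)). split.
      + apply (is_derive_minus (fun x => - (u x - w x)) (fun x => (c - cs) * x)).
        * apply (is_derive_opp (fun x => u x - w x)), (is_derive_minus u w);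
            [apply Hu| apply Hw]; lra.
        * auto_derive; auto. ring.
      + rewrite Hdiff by lra. specialize (Hle z ltac:(lra)). specialize (Hcoef z ltac:(lra)).
        nra. }
  lra.
Qed.

Lemma P00_ordered h q c cs u w : cs < c -> cont_on 0 1 q -> (forall x, 0 <= x <= 1 -> 0 <= q x) ->
  sol_P00 h q c u -> sol_P00 h q cs w -> forall t, 0 < t < 1 -> w t < u t.
Proof.
  intros Hcs Hq Hq0 [[Huc [_ [_ [Hud [Hun _]]]]] Hu1] [[Hwc [_ [_ [Hwd [Hwn _]]]]] Hw1] t Ht.
  destruct (Rlt_le_dec (w t) (u t)) as [|Hle]; auto. exfalso.
  assert (Hgap : forall r, t < r < 1 -> u r - w r <= - (c - cs) * (r - t)).
  { intros r Hr. apply (gap_forward h q c cs t r u w); try lra;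
      try (apply (cont_on_sub 0 1); auto; lra).
    - intros; apply Hq0; lra.
    - intros x Hx. split; [apply Hun| apply Hwn]; lra.
    - intros x Hx; apply Hud; lra.
    - intros x Hx; apply Hwd; lra. }
  set (e0 := (c - cs) * (1 - t) / 4).
  assert (He0 : 0 < e0) by (unfold e0; apply Rmult_lt_0_compat; [apply Rmult_lt_0_compat|]; lra).
  destruct (Huc 1 ltac:(lra) e0 He0) as [d1 [Hd1 H1]].
  destruct (Hwc 1 ltac:(lra) e0 He0) as [d2 [Hd2 H2]].
  set (r := Rmax ((1 + t) / 2) (1 - Rmin d1 d2 / 2)).
  pose proof (Rmin_l d1 d2). pose proof (Rmin_r d1 d2). pose proof (Rmin_pos _ _ Hd1 Hd2).
  assert (Hr : (1 + t) / 2 <= r /\ 1 - Rmin d1 d2 / 2 <= r /\ r < 1)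
    by (unfold r, Rmax; destruct Rle_dec; lra).
  specialize (Hgap r ltac:(lra)).
  specialize (H1 r ltac:(lra) ltac:(rewrite Rabs_left by lra; lra)).
  specialize (H2 r ltac:(lra) ltac:(rewrite Rabs_left by lra; lra)).
  rewrite Hu1, Rminus_0_r in H1. rewrite Hw1, Rminus_0_r in H2.
  assert (- (c - cs) * (r - t) <= - (c - cs) * (1 - t) / 2) by nra.
  unfold e0 in *. unfold Rabs in H1, H2; repeat destruct Rcase_abs; lra.
Qed.

(** * Solutions of [(P_c)] with [z 1] arbitrarily close to [0] *)

Lemma descending_line_sub_sol h q c s t B Mh : B < 0 -> 0 <= Mh ->
  (forall x, s <= x <= t -> Rabs (h x) <= Mh) -> (forall x, s <= x <= t -> 0 <= q x) ->
  sub_sol h q c s t (fun x => B - (Mh + Rabs c) * (x - s)).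
Proof.
  intros HB HMh Hh Hq x Hx. exists (- (Mh + Rabs c)). split; [auto_derive; auto; ring|].
  apply rhs_lower_bound; [apply Hh; lra| apply Hq; lra|].
  pose proof (Rabs_pos c). assert (0 <= (Mh + Rabs c) * (x - s)) by (apply Rmult_le_pos; lra).
  lra.
Qed.

Lemma shifted_super_sol h q c s t u eta : 0 <= eta -> solves h q c s t u ->
  (forall x, s < x < t -> u x < 0 /\ 0 <= q x) -> super_sol h q c s t (fun x => u x - eta).
Proof.
  intros Heta Hu Hn x Hx. exists (rhs h q c x (u x)). destruct (Hn x Hx). split.
  - replace (rhs h q c x (u x)) with (rhs h q c x (u x) - 0) by ring.
    apply (is_derive_minus u (fun _ => eta)); [apply Hu; lra|].
    exact (is_derive_const (K:=R_AbsRing) (V:=R_NormedModule) eta x).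
  - apply rhs_mono; lra.
Qed.

Lemma forward_piece h q c u x1 y0 eta Mh : 0 < x1 < 1 ->
  cont_on 0 1 h -> cont_on 0 1 q -> (forall x, 0 <= x <= 1 -> 0 <= q x) ->
  (forall x, 0 <= x <= 1 -> Rabs (h x) <= Mh) ->
  cont_on 0 1 u -> solves h q c 0 1 u -> (forall x, 0 <= x <= 1 -> u x <= 0) ->
  (forall x, 0 < x < 1 -> u x < 0) -> 0 < eta -> y0 <= u x1 - eta ->
  exists Yf, cont_on x1 1 Yf /\ Yf x1 = y0 /\ (forall x, x1 <= x <= 1 -> Yf x <= u x - eta) /\
    solves h q c x1 1 Yf /\ y0 - (Mh + Rabs c) * (1 - x1) <= Yf 1.
Proof.
  intros Hx1 Hh Hq Hq0 HMh Huc Hud Hule Hun Heta Hy0.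
  destruct (cont_on_bound 0 1 u ltac:(lra) Huc) as [Bu HBu].
  assert (HM : 0 <= Mh) by (pose proof (HMh 0 ltac:(lra)); pose proof (Rabs_pos (h 0)); lra).
  assert (HBu0 : 0 <= Bu) by (pose proof (HBu 0 ltac:(lra)); pose proof (Rabs_pos (u 0)); lra).
  set (A := Bu + Rabs y0 + eta + 1).
  assert (HA : 0 < A /\ - A <= y0 /\ forall x, x1 <= x <= 1 -> - A <= u x - eta - 1).
  { unfold A. pose proof (Rle_abs (- y0)). pose proof (Rabs_pos y0). rewrite Rabs_Ropp in *.
    split; [lra| split; [lra| intros x Hx]].
    pose proof (HBu x ltac:(lra)). pose proof (Rle_abs (- u x)). rewrite Rabs_Ropp in *. lra. }
  destruct HA as [HA0 [HAy HAu]].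
  destruct (barrier_solution_forward h q c x1 1 (fun x => - A - (Mh + Rabs c) * (x - x1))
              (fun x => u x - eta) y0 eta) as [Yf [HYc [HY0 [HYb HYd]]]]; try lra.
  - apply (cont_on_sub 0 1); auto; lra.
  - apply (cont_on_sub 0 1); auto; lra.
  - intros; apply Hq0; lra.
  - apply (cont_on_ext x1 1 (fun x => (- A + (Mh + Rabs c) * x1) + (- (Mh + Rabs c)) * x));
      [apply cont_on_affine| intros; ring].
  - apply cont_on_minus; [apply (cont_on_sub 0 1); auto; lra|].
    apply (cont_on_ext x1 1 (fun x => eta + 0 * x)); [apply cont_on_affine| intros; ring].
  - intros x Hx. specialize (HAu x Hx). pose proof (Rabs_pos c).
    assert (0 <= (Mh + Rabs c) * (x - x1)) by (apply Rmult_le_pos; lra). lra.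
  - intros x Hx. specialize (Hule x ltac:(lra)). lra.
  - apply descending_line_sub_sol; auto; [|intros x Hx; apply HMh| intros x Hx; apply Hq0]; lra.
  - apply shifted_super_sol; [lra| intros x Hx; apply Hud; lra|].
    intros x Hx. split; [apply Hun| apply Hq0]; lra.
  - exists Yf. split; [auto|]. split; [auto|]. split; [intros x Hx; apply HYb; auto|].
    split; [auto|]. rewrite <- HY0.
    apply (solution_slope_bound h q c x1 1 Yf Mh); auto; try lra.
    + intros x Hx. pose proof (HYb x ltac:(lra)). pose proof (Hule x ltac:(lra)). lra.
    + intros x Hx. apply HMh; lra.
    + intros x Hx. apply Hq0; lra.
Qed.

(* Continuation of a negative solution [Yf], given on [[x1, 1]] below a
   solution [u] of [(P_c)], backward to [(0, xm]] ([x1 < xm < 1]) below [u]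
   ([solution_to_zero]); the continuation agrees with [Yf] (backward
   uniqueness) and stays above a solution [w] of [(P_cs)], [cs <= c], since
   [w] is a supersolution for [c] ([comparison_backward]). *)
Lemma backward_continuation h q c cs u w x1 xm Yf : cs <= c ->
  cont_on 0 1 h -> cont_on 0 1 q -> (forall x, 0 <= x <= 1 -> 0 <= q x) ->
  sol_P h q c u -> sol_P h q cs w -> 0 < x1 < xm -> xm < 1 ->
  cont_on x1 1 Yf -> solves h q c x1 1 Yf -> (forall x, x1 <= x <= 1 -> Yf x < 0) ->
  (forall x, x1 <= x < 1 -> Yf x <= u x) -> w x1 <= Yf x1 ->
  exists Yb, Yb 0 = 0 /\ (forall a, 0 < a <= xm -> cont_on a xm Yb) /\
    solves h q c 0 xm Yb /\ (forall x, 0 < x <= xm -> Yb x <= u x) /\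
    (forall x, x1 <= x <= xm -> Yb x = Yf x) /\ (forall x, 0 < x <= x1 -> w x <= Yb x).
Proof.
  intros Hcs Hh Hq Hq0 [Huc [_ [_ [Hud [Hun _]]]]] [Hwc [_ [_ [Hwd [Hwn _]]]]]
    Hx1 Hxm HYc HYd HYn HYu Hw1.
  destruct (solution_to_zero h q c xm (Yf xm) u) as [Yb [HYb0 [HYbm [HYbc [HYbd HYbu]]]]];
    auto; try lra.
  { apply (cont_on_sub 0 1); auto; lra. }
  { intros x Hx. apply Hun. lra. }
  { apply solves_sub_sol. intros x Hx. apply Hud. lra. }
  { apply HYu. lra. }
  assert (Hagree : forall x, x1 <= x <= xm -> Yb x = Yf x).
  { intros x Hx. apply (uniqueness_backward h q c x1 xm Yb Yf); auto; try lra.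
    - apply HYbc; lra.
    - apply (cont_on_sub x1 1); auto; lra.
    - intros z Hz. pose proof (HYbu z ltac:(lra)). pose proof (Hun z ltac:(lra)).
      pose proof (HYn z ltac:(lra)). pose proof (Hq0 z ltac:(lra)). lra.
    - apply (solves_restrict h q c 0 xm); auto; lra.
    - apply (solves_restrict h q c x1 1); auto; lra. }
  exists Yb. do 5 (split; [auto|]).
  intros x Hx. apply (comparison_backward h q c x x1 Yb w); auto; try lra.
  - apply (cont_on_sub x xm); [apply HYbc| |]; lra.
  - apply (cont_on_sub 0 1); auto; lra.
  - intros z Hz. pose proof (HYbu z ltac:(lra)). pose proof (Hun z ltac:(lra)).
    pose proof (Hwn z ltac:(lra)). pose proof (Hq0 z ltac:(lra)). lra.
  - apply solves_sub_sol, (solves_restrict h q c 0 xm); auto; lra.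
  - intros z Hz. exists (rhs h q cs z (w z)). split; [apply Hwd; lra| unfold rhs; lra].
  - rewrite Hagree; lra.
Qed.

(* Under the hypotheses of [backward_continuation], gluing the continuation
   with [Yf] gives a solution of [(P_c)]: near [0] it is squeezed between
   [w] and [u]. *)
Lemma extend_to_zero h q c cs u w x1 Yf : cs <= c ->
  cont_on 0 1 h -> cont_on 0 1 q -> (forall x, 0 <= x <= 1 -> 0 <= q x) ->
  sol_P h q c u -> sol_P h q cs w -> 0 < x1 < 1 ->
  cont_on x1 1 Yf -> solves h q c x1 1 Yf -> (forall x, x1 <= x <= 1 -> Yf x < 0) ->
  (forall x, x1 <= x < 1 -> Yf x <= u x) -> w x1 <= Yf x1 ->
  exists Z, sol_P h q c Z /\ Z 1 = Yf 1.
Proof.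
  intros Hcs Hh Hq Hq0 Hu Hw Hx1 HYc HYd HYn HYu Hw1.
  set (xm := (x1 + 1) / 2).
  assert (Hxm : x1 < xm < 1) by (unfold xm; lra).
  destruct (backward_continuation h q c cs u w x1 xm Yf)
    as [Yb [HYb0 [HYbc [HYbd [HYbu [Hagree Hwb]]]]]]; auto; try lra.
  pose proof Hu as [_ [_ [_ [_ [Hun _]]]]]. pose proof Hw as [Hwc [_ [_ [_ [_ Hw0]]]]].
  set (Z := fun x => if Rle_dec x x1 then Yb x else Yf x).
  assert (HZb : forall x, 0 <= x <= xm -> Z x = Yb x).
  { intros x Hx. unfold Z. destruct Rle_dec; auto. symmetry; apply Hagree; lra. }
  assert (HZf : forall x, x1 <= x -> Z x = Yf x).
  { intros x Hx. unfold Z. destruct Rle_dec; auto. replace x with x1 by lra.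
    apply Hagree; lra. }
  exists Z. split; [|apply HZf; lra].
  apply sol_P_of_solves; auto.
  - rewrite HZb; auto. lra.
  - assert (Hc1 : cont_on x1 1 Z)
      by (apply (cont_on_ext x1 1 Yf); auto; intros; symmetry; apply HZf; lra).
    intros a Ha. destruct (Rle_dec a x1).
    + apply (cont_on_glue a x1 xm 1); auto; try lra.
      apply (cont_on_ext a xm Yb); [apply HYbc; lra| intros; symmetry; apply HZb; lra].
    + apply (cont_on_sub x1 1); auto; lra.
  - apply (squeeze_at_zero w Z x1); auto; [lra|]. intros x Hx.
    rewrite HZb by lra. pose proof (Hwb x ltac:(lra)). pose proof (HYbu x ltac:(lra)).
    pose proof (Hun x ltac:(lra)). lra.
  - apply (solves_glue h q c x1 xm Z Yb Yf); auto; try lra;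
      intros x Hx; symmetry; [apply HZb| apply HZf]; lra.
  - intros x Hx. unfold Z. destruct Rle_dec.
    + pose proof (HYbu x ltac:(lra)). pose proof (Hun x Hx). lra.
    + apply HYn; lra.
Qed.

Lemma point_near_one u M eps : cont_on 0 1 u -> u 1 = 0 -> 0 <= M -> 0 < eps ->
  exists x1, 1 / 2 <= x1 < 1 /\ - eps < u x1 /\ M * (1 - x1) < eps.
Proof.
  intros Huc Hu1 HM Heps.
  destruct (Huc 1 ltac:(lra) eps Heps) as [dl [Hdl Hdu]].
  set (m := Rmin (Rmin (dl / 2) (eps / (M + 1))) (1 / 2)).
  assert (Hm : 0 < m /\ m <= dl / 2 /\ m <= eps / (M + 1) /\ m <= 1 / 2).
  { pose proof (Rmin_l (Rmin (dl / 2) (eps / (M + 1))) (1 / 2)).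
    pose proof (Rmin_r (Rmin (dl / 2) (eps / (M + 1))) (1 / 2)).
    pose proof (Rmin_l (dl / 2) (eps / (M + 1))). pose proof (Rmin_r (dl / 2) (eps / (M + 1))).
    assert (0 < eps / (M + 1)) by (apply Rdiv_lt_0_compat; lra).
    unfold m. repeat split; try lra. apply Rmin_pos; [apply Rmin_pos|]; lra. }
  exists (1 - m). split; [lra| split].
  - specialize (Hdu (1 - m) ltac:(lra) ltac:(rewrite Rabs_left by lra; lra)).
    rewrite Hu1, Rminus_0_r in Hdu. unfold Rabs in Hdu; destruct Rcase_abs in Hdu; lra.
  - replace (1 - (1 - m)) with m by ring.
    apply Rle_lt_trans with (M * (eps / (M + 1))); [apply Rmult_le_compat_l; lra|].
    apply Rmult_lt_reg_r with (M + 1); [lra|].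
    replace (M * (eps / (M + 1)) * (M + 1)) with (M * eps) by (field; lra). nra.
Qed.

(* For [cs < c] with both [(P^00)] problems solvable, [(P_c)] has solutions
   with [z 1] in [(- eps, 0)] for every [eps > 0]: start a [forward_piece]
   close to [1], strictly between [w] and [u], then [extend_to_zero]. *)
Lemma solutions_near_zero h q c cs u w : cs < c ->
  cont_on 0 1 h -> cont_on 0 1 q -> (forall x, 0 <= x <= 1 -> 0 <= q x) ->
  sol_P00 h q c u -> sol_P00 h q cs w ->
  forall eps, 0 < eps -> exists z, sol_P h q c z /\ - eps < z 1 < 0.
Proof.
  intros Hcs Hh Hq Hq0 HU HW eps Heps.
  pose proof (P00_ordered h q c cs u w Hcs Hq Hq0 HU HW) as Hwu.
  destruct HU as [HuP Hu1]. destruct HW as [HwP _].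
  pose proof HuP as [Huc [_ [_ [Hud [Hun Hu0]]]]].
  destruct (cont_on_bound 0 1 h ltac:(lra) Hh) as [Mh HMh].
  set (M1 := Mh + Rabs c).
  assert (HM1 : 0 <= M1).
  { unfold M1. pose proof (HMh 0 ltac:(lra)). pose proof (Rabs_pos (h 0)).
    pose proof (Rabs_pos c). lra. }
  destruct (point_near_one u M1 (eps / 3)) as [x1 [Hx1 [Hux1 HMx]]]; auto; [lra|].
  assert (Hwx1 : w x1 < u x1) by (apply Hwu; lra).
  set (y0 := (Rmax (w x1) (u x1 - eps / 3) + u x1) / 2).
  assert (Hy0 : w x1 < y0 /\ u x1 - eps / 3 < y0 /\ y0 < u x1)
    by (unfold y0, Rmax; destruct Rle_dec; lra).
  assert (Hule : forall x, 0 <= x <= 1 -> u x <= 0).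
  { intros x Hx. destruct (Req_dec x 1) as [->|]; [lra|].
    destruct (Req_dec x 0) as [->|]; [lra|]. left; apply Hun; lra. }
  destruct (forward_piece h q c u x1 y0 ((u x1 - y0) / 2) Mh)
    as [Yf [HYc [HY0 [HYu [HYd HY1]]]]]; auto; try lra.
  destruct (extend_to_zero h q c cs u w x1 Yf) as [Z [HZ HZ1]]; auto; try lra.
  - intros x Hx. pose proof (HYu x Hx). pose proof (Hule x ltac:(lra)). lra.
  - intros x Hx. pose proof (HYu x ltac:(lra)). lra.
  - exists Z. split; auto. rewrite HZ1. pose proof (HYu 1 ltac:(lra)).
    fold M1 in HY1. lra.
Qed.

(** * The threshold [beta (c)] *)

Lemma infimum_exists (S : R -> Prop) lb : (exists b, S b) -> (forall b, S b -> lb <= b) ->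
  exists beta, lb <= beta /\ (forall b, S b -> beta <= b) /\
    (forall e, 0 < e -> exists b, S b /\ b < beta + e).
Proof.
  intros [b0 Hb0] Hlb.
  destruct (completeness (fun v => S (- v))) as [m [Hub Hlub]].
  - exists (- lb). intros v Hv. specialize (Hlb _ Hv). lra.
  - exists (- b0). rewrite Ropp_involutive. exact Hb0.
  - exists (- m). split; [|split].
    + assert (Hb : is_upper_bound (fun v => S (- v)) (- lb))
        by (intros v Hv; specialize (Hlb _ Hv); lra).
      specialize (Hlub _ Hb). lra.
    + intros b Hb. assert (HS : S (- - b)) by (rewrite Ropp_involutive; auto).
      specialize (Hub _ HS). lra.
    + intros e He. apply NNPP. intros Hn.
      assert (Hb : is_upper_bound (fun v => S (- v)) (m - e)).
      { intros v Hv. apply Rnot_lt_le. intros Hlt. apply Hn. exists (- v). split; [auto|lra]. }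
      specialize (Hlub _ Hb). lra.
Qed.

(* Every level [b] with [beta <= b < z0 1 < 0] is attained, when [beta] is
   approached by attained levels: the backward solution from [(1, b)] below
   [z0] stays above [f x - c x - e] for every [e > 0] (compare it with
   solutions ending just above [beta] via [gap_backward]), so it tends to
   [0] at [0]. *)
Lemma solution_at_level f h q c beta b z0 : C1_with_deriv f h -> f 0 = 0 ->
  cont_on 0 1 q -> (forall x, 0 <= x <= 1 -> 0 <= q x) ->
  (forall e, 0 < e -> exists z, sol_P h q c z /\ z 1 < 0 /\ z 1 < beta + e) ->
  sol_P h q c z0 -> b < z0 1 < 0 -> beta <= b ->
  exists z, sol_P h q c z /\ z 1 = b.
Proof.
  intros HC1 Hf0 Hq Hq0 Hnear Hz0 Hb Hbb.
  pose proof HC1 as [Hfc [Hhc _]].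
  pose proof Hz0 as [Hz0c [_ [_ [Hz0d [Hz0n Hz00]]]]].
  destruct (solution_to_zero h q c 1 b z0) as [Y [HY0 [HY1 [HYc [HYd HYu]]]]]; auto; try lra.
  { intros x Hx. destruct (Req_dec x 1) as [->|]; [lra|]. apply Hz0n; lra. }
  { apply solves_sub_sol. intros x Hx. apply Hz0d; auto. }
  assert (HYn : forall x, 0 < x < 1 -> Y x < 0).
  { intros x Hx. pose proof (HYu x ltac:(lra)). pose proof (Hz0n x Hx). lra. }
  assert (Hlow : forall x, 0 < x <= 1 -> f x - c * x <= Y x).
  { intros x Hx. apply (le_of_geometric_error _ _ 1); [lra|]. intros n.
    assert (Hp : 0 < (/2) ^ n) by (apply pow_lt; lra).
    destruct (Hnear _ Hp) as [z' [Hz' [Hz'1 Hz'b]]].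
    pose proof Hz' as [Hz'c [_ [_ [Hz'd [Hz'n _]]]]].
    pose proof (sol_P_lower_bound f h q c z' HC1 Hf0 Hq0 Hz' x ltac:(lra)).
    assert (z' x - Y x <= Rmax 0 (z' 1 - b)).
    { apply (gap_backward h q c x 1 Y z'); try lra.
      - apply Rmax_l.
      - apply HYc; lra.
      - apply (cont_on_sub 0 1); auto; lra.
      - intros z Hz. split; [apply HYn; lra| split; [apply Hz'n; lra| apply Hq0; lra]].
      - apply (solves_restrict h q c 0 1); auto; lra.
      - intros z Hz. apply Hz'd; lra.
      - rewrite HY1. apply Rmax_r. }
    assert (Rmax 0 (z' 1 - b) <= 1 * (/2) ^ n)
      by (apply Rmax_lub; lra).
    lra. }
  exists Y. split; auto.
  apply sol_P_of_solves; auto.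
  apply (squeeze_at_zero (fun x => f x - c * x) Y 1); [lra| | |].
  - apply cont_on_minus; auto.
    apply (cont_on_ext 0 1 (fun x => 0 + c * x)); [apply cont_on_affine| intros; ring].
  - rewrite Hf0. ring.
  - intros x Hx. pose proof (Hlow x ltac:(lra)). pose proof (HYn x Hx). lra.
Qed.

(* [beta (c)] is the infimum of the attained negative levels [z 1]: it is
   finite since every solution lies above [f x - c x] ([sol_P_lower_bound]),
   negative since levels near [0] are attained ([solutions_near_zero], using
   the [(P^00)] solutions for [c] and for [c* < c]), every level in
   [[beta, 0)] is attained ([solution_at_level]), and the solution with a
   given level is unique ([sol_P_unique]). *)
Theorem proposition5p1 (f h q : R -> R) (cstar : R) :
  C1_with_deriv f h ->
  f 0 = 0 ->
  cond_q q ->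
  (forall c, (exists z, sol_P00 h q c z) <-> cstar <= c) ->
  forall c, cstar < c ->
  exists beta, beta < 0 /\ f 1 - c <= beta /\
    (forall b, b < 0 ->
       ((exists z, sol_P h q c z /\ z 1 = b) <-> beta <= b)) /\
    (forall b, b < 0 -> forall z1 z2,
       sol_P h q c z1 -> z1 1 = b ->
       sol_P h q c z2 -> z2 1 = b ->
       forall x, 0 <= x <= 1 -> z1 x = z2 x).
Proof.
  intros HC1 Hf0 [Hqc [Hqpos [Hq00 [Hq01 _]]]] Hcs c Hc.
  pose proof HC1 as [_ [Hhc _]].
  assert (Hq0 : forall x, 0 <= x <= 1 -> 0 <= q x).
  { intros x Hx. destruct (Req_dec x 0) as [->|]; [lra|].
    destruct (Req_dec x 1) as [->|]; [lra|]. left; apply Hqpos; lra. }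
  destruct (proj2 (Hcs c) ltac:(lra)) as [u Hu].
  destruct (proj2 (Hcs cstar) ltac:(lra)) as [w Hw].
  pose proof (solutions_near_zero h q c cstar u w Hc Hhc Hqc Hq0 Hu Hw) as Hnear.
  set (S := fun b => b < 0 /\ exists z, sol_P h q c z /\ z 1 = b).
  destruct (infimum_exists S (f 1 - c)) as [beta [Hlb [Hinf Happrox]]].
  { destruct (Hnear 1 ltac:(lra)) as [z [Hz Hz1]]. exists (z 1). split; [lra| eauto]. }
  { intros b [_ [z [Hz <-]]]. pose proof (sol_P_lower_bound f h q c z HC1 Hf0 Hq0 Hz 1). lra. }
  exists beta. split; [|split; [auto| split]].
  - destruct (Hnear 1 ltac:(lra)) as [z [Hz Hz1]].
    assert (HS : S (z 1)) by (split; [lra| eauto]). specialize (Hinf _ HS). lra.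
  - intros b Hb. split.
    + intros Hz. apply Hinf. split; auto.
    + intros Hbb. destruct (Hnear (- b) ltac:(lra)) as [z0 [Hz0 Hz01]].
      apply (solution_at_level f h q c beta b z0); auto; try lra.
      intros e He. destruct (Happrox e He) as [b' [[Hb'0 [z [Hz <-]]] Hb']]. eauto.
  - intros b Hb z1 z2 Hz1 Hz1b Hz2 Hz2b.
    apply (sol_P_unique h q c z1 z2); auto. congruence.
Qed.
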